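(* Let $\mathcal{F}=(\mu_n,\mathcal{S}_n,L_n,\pi_n)_{n\ge1}$ be a family of irreducible, reversible continuous-time finite Markov chains with $\pi_n(|\mu_n/\pi_n|^2)\to\infty$. The following are equivalent: (1) $\mathcal{F}$ has an $L^2$-cutoff; (2) for all $\epsilon>0$ and $c>0$, $T_{n,2}(\mu_n,\epsilon)\lambda_{n,j_n(c)}\to\infty$; (3) there is $\epsilon>0$ such that $T_{n,2}(\mu_n,\epsilon)\lambda_{n,j_n(c)}\to\infty$ for all $c>0$; (4) for all $c>0$, $\tau_n(c)\lambda_{n,j_n(c)}\to\infty$; (5) for all $\tilde c>0$, $c>0$, $\tau_n(\tilde c)\lambda_{n,j_n(c)}\to\infty$; (6) there is $\tilde c>0$ with $\tau_n(\tilde c)\lambda_{n,j_n(c)}\to\infty$ for all $c>0$. Moreover, if $\mathcal{F}$ has an $L^2$-cutoff, then $\tau_n(c)$ is an $L^2$-cutoff time for every $c>0$, and \[|T_{n,2}(\mu_n,\epsilon)-T_{n,2}(\mu_n,\delta)|=O(1/\lambda_{n,j_n(c)})\ \ \forall\epsilon,\delta,c>0,\qquad |T_{n,2}(\mu_n,\epsilon)-\tau_n(c)|=O\big(\sqrt{\tau_n(c)/\lambda_{n,j_n(c)}}\big)\ \ \forall\epsilon,c>0.\]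
   Context: For the $n$th chain, $H_{n,t}=e^{tL_n}$, $d_{n,2}(\mu_n,t)=\big(\sum_y|\mu_nH_{n,t}(y)/\pi_n(y)-1|^2\pi_n(y)\big)^{1/2}$, $T_{n,2}(\mu_n,\epsilon)=\min\{t\ge0:d_{n,2}(\mu_n,t)\le\epsilon\}$, and $\pi_n(|\mu_n/\pi_n|^2)=\sum_y\mu_n(y)^2/\pi_n(y)$. Let $0=\lambda_{n,0}<\lambda_{n,1}\le\dots\le\lambda_{n,|\mathcal{S}_n|-1}$ be the eigenvalues of $-L_n$ with $L^2(\pi_n)$-orthonormal right eigenvectors $\phi_{n,0}=\mathbf 1,\phi_{n,1},\dots$; $\mu_n(\phi)=\sum_x\mu_n(x)\phi(x)$. For $c>0$: $j_n(c)=\min\{j\ge1:\sum_{i=1}^j|\mu_n(\phi_{n,i})|^2>c\}$ and $\tau_n(c)=\max_{j\ge j_n(c)}\frac{\log(1+\sum_{i=1}^j|\mu_n(\phi_{n,i})|^2)}{2\lambda_{n,j}}$. $L^2$-cutoff: there is $t_n>0$ with $d_{n,2}(\mu_n,(1+a)t_n)\to0$ and $d_{n,2}(\mu_n,(1-a)t_n)\to\infty$ for all $a\in(0,1)$; $t_n$ is then a cutoff time. $a_n=O(b_n)$ means $\sup_na_n/b_n<\infty$. *)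

From Stdlib Require Import Reals ClassicalEpsilon Factorial.
Open Scope R_scope.

Fixpoint sumN (N : nat) (f : nat -> R) : R :=
  match N with 0%nat => 0 | S k => sumN k f + f k end.

(* A continuous-time finite Markov chain on S = {0,...,sz-1} with generator
   gen, stationary distribution pi, initial distribution mu, together with a
   choice of eigenvalues lam_0 <= lam_1 <= ... of -gen and L^2(pi)-orthonormal
   right eigenvectors phi_0 = 1, phi_1, ... *)
Record chain := mkChain {
  sz  : nat;
  gen : nat -> nat -> R;
  pi  : nat -> R;
  mu  : nat -> R;
  lam : nat -> R;
  phi : nat -> nat -> R
}.

Inductive reach (N : nat) (L : nat -> nat -> R) : nat -> nat -> Prop :=
| reach_refl x : reach N L x x
| reach_step x y z : (y < N)%nat -> 0 < L x y -> reach N L y z -> reach N L x z.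

Definition is_generator (N : nat) (L : nat -> nat -> R) : Prop :=
  (forall x y, (x < N)%nat -> (y < N)%nat -> x <> y -> 0 <= L x y) /\
  (forall x, (x < N)%nat -> sumN N (fun y => L x y) = 0).

Definition irreducible (N : nat) (L : nat -> nat -> R) : Prop :=
  forall x y, (x < N)%nat -> (y < N)%nat -> reach N L x y.

Definition rev_chain (c : chain) : Prop :=
  (1 <= sz c)%nat /\
  is_generator (sz c) (gen c) /\
  irreducible (sz c) (gen c) /\
  (forall x, (x < sz c)%nat -> 0 < pi c x) /\
  sumN (sz c) (pi c) = 1 /\
  (forall x y, (x < sz c)%nat -> (y < sz c)%nat ->
     pi c x * gen c x y = pi c y * gen c y x) /\
  (forall x, (x < sz c)%nat -> 0 <= mu c x) /\
  sumN (sz c) (mu c) = 1.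

Definition spectral_data (c : chain) : Prop :=
  (forall i x, (i < sz c)%nat -> (x < sz c)%nat ->
     sumN (sz c) (fun y => gen c x y * phi c i y) = - lam c i * phi c i x) /\
  (forall i k, (i < sz c)%nat -> (k < sz c)%nat ->
     sumN (sz c) (fun x => pi c x * phi c i x * phi c k x)
       = if Nat.eqb i k then 1 else 0) /\
  (forall x, (x < sz c)%nat -> phi c 0 x = 1) /\
  lam c 0 = 0 /\
  ((1 < sz c)%nat -> 0 < lam c 1) /\
  (forall i k, (1 <= i)%nat -> (i <= k)%nat -> (k < sz c)%nat -> lam c i <= lam c k).

Definition matmul (N : nat) (A B : nat -> nat -> R) : nat -> nat -> R :=
  fun x y => sumN N (fun z => A x z * B z y).
Fixpoint matpow (N : nat) (A : nat -> nat -> R) (m : nat) : nat -> nat -> R :=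
  match m with
  | 0%nat => fun x y => if Nat.eqb x y then 1 else 0
  | S k => matmul N (matpow N A k) A
  end.

(* H_t = e^{tL} = sum_m t^m L^m / m!  (the series converges; its sum is unique) *)
Definition heat (N : nat) (L : nat -> nat -> R) (t : R) (x y : nat) : R :=
  epsilon (inhabits 0)
    (fun h => infinite_sum (fun m => t ^ m / INR (fact m) * matpow N L m x y) h).

Definition muH (c : chain) (t : R) (y : nat) : R :=
  sumN (sz c) (fun x => mu c x * heat (sz c) (gen c) t x y).

Definition d2 (c : chain) (t : R) : R :=
  sqrt (sumN (sz c) (fun y => (muH c t y / pi c y - 1) ^ 2 * pi c y)).

Definition T2 (c : chain) (eps : R) : R :=
  epsilon (inhabits 0)
    (fun T => 0 <= T /\ d2 c T <= eps /\
              forall t, 0 <= t -> d2 c t <= eps -> T <= t).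

Definition chi2 (c : chain) : R := sumN (sz c) (fun y => mu c y ^ 2 / pi c y).

Definition mu_phi (c : chain) (i : nat) : R :=
  sumN (sz c) (fun x => mu c x * phi c i x).

Definition psum (c : chain) (j : nat) : R :=
  sumN j (fun i => (mu_phi c (S i)) ^ 2).

Fixpoint jsearch (f : nat -> R) (cc : R) (j fuel : nat) : nat :=
  match fuel with
  | 0%nat => j
  | S k => if Rlt_dec cc (f j) then j else jsearch f cc (S j) k
  end.

(* j_n(c) = min { j >= 1 : sum_{i=1}^j |mu(phi_i)|^2 > c }, searched over
   1 <= j <= |S|-1; (conventional value |S| when the set is empty) *)
Definition jn (c : chain) (cc : R) : nat := jsearch (psum c) cc 1 (sz c - 1).

Fixpoint maxfrom (g : nat -> R) (j fuel : nat) : R :=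
  match fuel with
  | 0%nat => g j
  | S k => Rmax (g j) (maxfrom g (S j) k)
  end.

Definition taun (c : chain) (cc : R) : R :=
  let j0 := jn c cc in
  maxfrom (fun j => ln (1 + psum c j) / (2 * lam c j)) j0 (sz c - 1 - j0).

Definition cutoff_time (F : nat -> chain) (t : nat -> R) : Prop :=
  (exists N0, forall n, (N0 <= n)%nat -> 0 < t n) /\
  forall a, 0 < a < 1 ->
    Un_cv (fun n => d2 (F n) ((1 + a) * t n)) 0 /\
    cv_infty (fun n => d2 (F n) ((1 - a) * t n)).

Definition has_L2_cutoff (F : nat -> chain) : Prop :=
  exists t, cutoff_time F t.

Definition bigO (a b : nat -> R) : Prop :=
  exists C N0, forall n, (N0 <= n)%nat -> a n <= C * b n.

From Pilot Require Import Defs.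
From Stdlib Require Import Reals Lra Lia Factorial ClassicalEpsilon.
From mathcomp Require all_boot all_algebra Rstruct.
Open Scope R_scope.

(* Expanding [mu H_t / pi - 1] in the orthonormal eigenbasis gives
     d_2(mu, t)^2 = sum_{i >= 1} a_i^2 exp (-2 lam_i t),   a_i = mu(phi_i),
   and everything is read off this profile.  With j = j_n(c) and tau = tau_n(c),
   the index k attaining the maximum in tau satisfies
   1 + a_1^2 + ... + a_k^2 = exp (2 lam_k tau), whence
   d_2^2(t) >= c/(1+c) exp (2 lam_j (tau - t)) for t <= tau; an Abel summation of
   the tail i >= j against 1 + a_1^2 + ... + a_k^2 <= exp (2 lam_k tau) gives
   d_2^2(tau + u) <= c + (1 + 2 (tau + u)/u) exp (-2 lam_j u).  Thus d_2 falls from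
   large to small within a window of order 1/lam_j around tau (sqrt (tau/lam_j)
   uniformly in epsilon), which is negligible against tau exactly when
   tau lam_j -> oo; the monotone dependence of j and tau on c is absorbed by the
   same two bounds. *)

Lemma sumN_ext N f g : (forall i, (i < N)%nat -> f i = g i) -> sumN N f = sumN N g.
Proof.
induction N as [|N IH]; intros H; simpl; auto.
rewrite IH by (intros; apply H; lia). rewrite H by lia. reflexivity.
Qed.

Lemma sumN_add N f g : sumN N (fun i => f i + g i) = sumN N f + sumN N g.
Proof. induction N; simpl; [lra|]. rewrite IHN. lra. Qed.

Lemma sumN_sub N f g : sumN N (fun i => f i - g i) = sumN N f - sumN N g.
Proof. induction N; simpl; [lra|]. rewrite IHN. lra. Qed.

Lemma sumN_mull N c f : sumN N (fun i => c * f i) = c * sumN N f.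
Proof. induction N; simpl; [lra|]. rewrite IHN. lra. Qed.

Lemma sumN_mulr N c f : sumN N (fun i => f i * c) = sumN N f * c.
Proof. induction N; simpl; [lra|]. rewrite IHN. lra. Qed.

Lemma sumN_0 N : sumN N (fun _ => 0) = 0.
Proof. induction N; simpl; [lra|]. rewrite IHN. lra. Qed.

Lemma sumN_swap N M f :
  sumN N (fun i => sumN M (fun j => f i j)) = sumN M (fun j => sumN N (fun i => f i j)).
Proof.
induction N; simpl; [symmetry; apply sumN_0|].
rewrite IHN, <- sumN_add. reflexivity.
Qed.

Lemma sumN_le N f g : (forall i, (i < N)%nat -> f i <= g i) -> sumN N f <= sumN N g.
Proof.
induction N; simpl; intros H; [lra|].
assert (sumN N f <= sumN N g) by (apply IHN; intros; apply H; lia).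
assert (f N <= g N) by (apply H; lia). lra.
Qed.

Lemma sumN_ge0 N f : (forall i, (i < N)%nat -> 0 <= f i) -> 0 <= sumN N f.
Proof. intros H. rewrite <- (sumN_0 N). apply sumN_le; auto. Qed.

Lemma sumN_Sl N f : sumN (S N) f = f 0%nat + sumN N (fun i => f (S i)).
Proof. induction N; simpl in *; [lra|]. rewrite IHN. lra. Qed.

Lemma sumN_cat p q f : sumN (p + q) f = sumN p f + sumN q (fun i => f (p + i)%nat).
Proof.
induction q; simpl; [rewrite Nat.add_0_r; lra|].
rewrite Nat.add_succ_r. simpl. rewrite IHq. lra.
Qed.

Lemma sumN_le_prefix N f K : (forall i, 0 <= f i) -> (K <= N)%nat -> sumN K f <= sumN N f.
Proof.
intros H HK. replace N with (K + (N - K))%nat by lia. rewrite sumN_cat.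
assert (0 <= sumN (N - K) (fun i => f (K + i)%nat)) by (apply sumN_ge0; auto). lra.
Qed.

Lemma sumN_kronecker N x g : (x < N)%nat ->
  sumN N (fun z => g z * (if Nat.eqb z x then 1 else 0)) = g x.
Proof.
induction N; intros Hx; [lia|]. simpl.
destruct (Nat.eq_dec x N) as [->|ne].
- rewrite Nat.eqb_refl, (sumN_ext N _ (fun _ => 0)), sumN_0; [lra|].
  intros i Hi. destruct (Nat.eqb_spec i N); [lia|lra].
- rewrite IHN by lia. destruct (Nat.eqb_spec N x); [lia|lra].
Qed.

Lemma sumN_sqr N g : (sumN N g) ^ 2 = sumN N (fun i => sumN N (fun k => g i * g k)).
Proof.
replace (sumN N g ^ 2) with (sumN N g * sumN N g) by ring.
rewrite <- sumN_mulr. apply sumN_ext. intros i _. symmetry. apply sumN_mull.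
Qed.

Module SumNMatrix.
Import all_boot all_algebra Rstruct GRing.Theory.
Local Open Scope ring_scope.

Lemma sumN_big (N : nat) (f : nat -> R) : sumN N f = \sum_(i < N) f i.
Proof. by elim: N => [|N IH]; rewrite ?big_ord0 // big_ord_recr /= IH. Qed.

Lemma sumN_inverse_comm (N : nat) (B C : nat -> nat -> R) :
  (forall i k, (i < N)%coq_nat -> (k < N)%coq_nat ->
     sumN N (fun x => Rmult (B i x) (C x k)) = if Nat.eqb i k then R1 else R0) ->
  forall x y, (x < N)%coq_nat -> (y < N)%coq_nat ->
     sumN N (fun i => Rmult (C x i) (B i y)) = if Nat.eqb x y then R1 else R0.
Proof.
move=> BC x y Hx Hy.
pose Bm : 'M[R]_N := \matrix_(i, j) B i j.
pose Cm : 'M[R]_N := \matrix_(i, j) C i j.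
have eqb_ord (i k : 'I_N) : Nat.eqb i k = (i == k).
  by case: Nat.eqb_spec => [/val_inj ->|ne]; [rewrite eqxx | case: eqP => // E; case: ne; rewrite E].
have BmCm : Bm *m Cm = 1%:M.
  apply/matrixP => i k; rewrite !mxE; under eq_bigr do rewrite !mxE.
  rewrite -(sumN_big N (fun x => B i x * C x k)) BC; try by apply/ltP.
  by rewrite eqb_ord; case: (i == k).
have := mulmx1C BmCm => /matrixP /(_ (Ordinal (introT ltP Hx)) (Ordinal (introT ltP Hy))).
rewrite !mxE; under eq_bigr do rewrite !mxE.
rewrite -(sumN_big N (fun i => C x i * B i y)) => ->.
by rewrite -(inj_eq val_inj) /=; case: Nat.eqb_spec => [->|/eqP/negbTE ->]; rewrite ?eqxx.
Qed.
End SumNMatrix.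

Lemma infinite_sum_ext u v l : (forall m, u m = v m) -> infinite_sum u l -> infinite_sum v l.
Proof. intros E. apply Un_cv_ext. intros n. apply sum_eq. auto. Qed.

Lemma infinite_sum_plus u v a b :
  infinite_sum u a -> infinite_sum v b -> infinite_sum (fun m => u m + v m) (a + b).
Proof.
intros Hu Hv. apply (Un_cv_ext (fun n => sum_f_R0 u n + sum_f_R0 v n)).
- intros n. symmetry. apply plus_sum.
- exact (CV_plus _ _ _ _ Hu Hv).
Qed.

Lemma Un_cv_const k : Un_cv (fun _ => k) k.
Proof. intros e He. exists 0%nat. intros n _. unfold R_dist. rewrite Rminus_diag, Rabs_R0. lra. Qed.

Lemma infinite_sum_mulr u a k : infinite_sum u a -> infinite_sum (fun m => u m * k) (a * k).
Proof.
intros Hu. apply (Un_cv_ext (fun n => sum_f_R0 u n * k)).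
- intros n. rewrite Rmult_comm. apply scal_sum.
- exact (CV_mult _ _ _ _ Hu (Un_cv_const k)).
Qed.

Lemma infinite_sum_sumN K (u : nat -> nat -> R) (l : nat -> R) :
  (forall i, (i < K)%nat -> infinite_sum (u i) (l i)) ->
  infinite_sum (fun m => sumN K (fun i => u i m)) (sumN K l).
Proof.
induction K as [|K IH]; intros H; simpl.
- apply (Un_cv_ext (fun _ => 0)); [|apply Un_cv_const].
  intros n. induction n; simpl; [reflexivity|]. rewrite <- IHn. ring.
- apply infinite_sum_plus; [apply IH; intros i Hi|]; apply H; lia.
Qed.

Lemma infinite_sum_exp x : infinite_sum (fun m => / INR (fact m) * x ^ m) (exp x).
Proof. unfold exp. destruct (exist_exp x) as [l Hl]. exact Hl. Qed.

Definition d2sq_term (c : chain) (i : nat) (t : R) : R :=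
  mu_phi c (S i) ^ 2 * exp (-2 * lam c (S i) * t).

(* The summation index [i] stands for the eigenvalue [lam c (S i)]. *)
Definition d2sq (c : chain) (t : R) : R := sumN (sz c - 1) (fun i => d2sq_term c i t).

Section SpectralExpansion.
Variable c : chain.
Hypothesis Hc : rev_chain c.
Hypothesis Hs : spectral_data c.
Let N := sz c.
Let M := (sz c - 1)%nat.

Lemma phi_complete x y : (x < N)%nat -> (y < N)%nat ->
  sumN N (fun i => phi c i x * phi c i y * pi c y) = if Nat.eqb x y then 1 else 0.
Proof.
intros Hx Hy. destruct Hs as [_ [Hon _]].
assert (Horth : forall i k, (i < N)%nat -> (k < N)%nat ->
  sumN N (fun x => phi c i x * (pi c x * phi c k x)) = if Nat.eqb i k then R1 else R0).
{ intros i k Hi Hk. transitivity (if Nat.eqb i k then 1 else 0).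
  - rewrite <- (Hon i k Hi Hk). apply sumN_ext. intros; ring.
  - destruct (Nat.eqb i k); reflexivity. }
assert (Hcompl := SumNMatrix.sumN_inverse_comm N _ _ Horth y x Hy Hx).
rewrite Nat.eqb_sym. transitivity (if Nat.eqb y x then R1 else R0).
- rewrite <- Hcompl. apply sumN_ext. intros; simpl; ring.
- destruct (Nat.eqb y x); reflexivity.
Qed.

Lemma matpow_spectral m x y : (x < N)%nat -> (y < N)%nat ->
  matpow N (gen c) m x y = sumN N (fun i => (- lam c i) ^ m * (phi c i x * phi c i y * pi c y)).
Proof.
destruct Hc as [_ [_ [_ [_ [_ [Hrev _]]]]]]. destruct Hs as [Heig _].
revert y. induction m as [|m IH]; intros y Hx Hy; simpl.
- rewrite <- phi_complete by auto. apply sumN_ext. intros; ring.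
- unfold matmul.
  rewrite (sumN_ext N _ (fun z => sumN N (fun i =>
    (- lam c i) ^ m * phi c i x * (pi c y * (gen c y z * phi c i z))))).
  2:{ intros z Hz. rewrite IH, <- sumN_mulr by auto. apply sumN_ext. intros i _.
      replace (pi c y * (gen c y z * phi c i z)) with (pi c z * gen c z y * phi c i z)
        by (rewrite Hrev by auto; ring).
      ring. }
  rewrite sumN_swap. apply sumN_ext. intros i Hi.
  rewrite sumN_mull, sumN_mull, Heig by auto. ring.
Qed.

Lemma heat_spectral t x y : (x < N)%nat -> (y < N)%nat ->
  heat N (gen c) t x y = sumN N (fun i => exp (- lam c i * t) * (phi c i x * phi c i y * pi c y)).
Proof.
intros Hx Hy.
assert (Hsum : infinite_sum (fun m => t ^ m / INR (fact m) * matpow N (gen c) m x y)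
   (sumN N (fun i => exp (- lam c i * t) * (phi c i x * phi c i y * pi c y)))).
{ eapply infinite_sum_ext; [| apply (infinite_sum_sumN N (fun i m =>
      (/ INR (fact m) * (- lam c i * t) ^ m) * (phi c i x * phi c i y * pi c y)))].
  - intros m. rewrite matpow_spectral by auto. unfold Rdiv. rewrite <- sumN_mull.
    apply sumN_ext. intros i _. rewrite Rpow_mult_distr. ring.
  - intros i _. apply infinite_sum_mulr, infinite_sum_exp. }
apply (uniqueness_sum (fun m => t ^ m / INR (fact m) * matpow N (gen c) m x y)); auto.
unfold heat. apply epsilon_spec. eauto.
Qed.

Lemma muH_spectral t y : (y < N)%nat ->
  muH c t y = sumN N (fun i => exp (- lam c i * t) * mu_phi c i * phi c i y * pi c y).
Proof.
intros Hy. unfold muH, mu_phi. fold N.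
rewrite (sumN_ext N _ (fun x => sumN N (fun i =>
  mu c x * (exp (- lam c i * t) * (phi c i x * phi c i y * pi c y))))).
2:{ intros x Hx. rewrite heat_spectral, <- sumN_mull by auto. reflexivity. }
rewrite sumN_swap. apply sumN_ext. intros i _.
rewrite <- sumN_mull, <- !sumN_mulr. apply sumN_ext. intros; ring.
Qed.

Lemma mu_phi_0 : mu_phi c 0 = 1.
Proof.
destruct Hs as [_ [_ [Hp0 _]]]. destruct Hc as [_ [_ [_ [_ [_ [_ [_ Hmu]]]]]]].
rewrite <- Hmu. apply sumN_ext. intros x Hx. rewrite Hp0 by auto. ring.
Qed.

Lemma muH_density_sub1 t y : (y < N)%nat ->
  muH c t y / pi c y - 1
  = sumN M (fun i => exp (- lam c (S i) * t) * mu_phi c (S i) * phi c (S i) y).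
Proof.
intros Hy. destruct Hc as [Hsz [_ [_ [Hpi _]]]]. destruct Hs as [_ [_ [Hp0 [Hl0 _]]]].
assert (0 < pi c y) by auto.
rewrite muH_spectral by auto. unfold Rdiv. rewrite <- sumN_mulr.
replace N with (S M) by (unfold N, M; lia). rewrite sumN_Sl.
rewrite Hp0, Hl0, mu_phi_0, Ropp_0, Rmult_0_l, exp_0 by (unfold N in *; lia).
replace (1 * 1 * 1 * pi c y * / pi c y) with 1 by (field; lra).
ring_simplify. apply sumN_ext. intros i _. field. lra.
Qed.

Lemma d2_sum_sq t : sumN N (fun y => (muH c t y / pi c y - 1) ^ 2 * pi c y) = d2sq c t.
Proof.
destruct Hs as [_ [Hon _]].
rewrite (sumN_ext N _ (fun y => sumN M (fun i => sumN M (fun k =>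
   (exp (- lam c (S i) * t) * mu_phi c (S i)) * (exp (- lam c (S k) * t) * mu_phi c (S k)) *
   (pi c y * phi c (S i) y * phi c (S k) y))))).
2:{ intros y Hy. rewrite muH_density_sub1, sumN_sqr, <- sumN_mulr by auto.
    apply sumN_ext. intros i _. rewrite <- sumN_mulr. apply sumN_ext. intros; ring. }
rewrite sumN_swap. apply sumN_ext. intros i Hi.
rewrite sumN_swap, (sumN_ext M _ (fun k =>
  (exp (- lam c (S i) * t) * mu_phi c (S i)) * (exp (- lam c (S k) * t) * mu_phi c (S k))
  * (if Nat.eqb k i then 1 else 0))).
2:{ intros k Hk. rewrite sumN_mull, Hon, Nat.eqb_sym by (unfold M in *; lia). reflexivity. }
rewrite sumN_kronecker by auto. unfold d2sq_term.
replace (-2 * lam c (S i) * t) with (- lam c (S i) * t + - lam c (S i) * t) by ring.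
rewrite exp_plus. ring.
Qed.

Lemma d2_sqrt_d2sq t : Defs.d2 c t = sqrt (d2sq c t).
Proof. unfold Defs.d2. fold N. rewrite d2_sum_sq. reflexivity. Qed.

Lemma muH_0 y : (y < N)%nat -> muH c 0 y = mu c y.
Proof.
intros Hy. rewrite muH_spectral by auto. unfold mu_phi.
rewrite (sumN_ext N _ (fun i => sumN N (fun x => mu c x * (phi c i x * phi c i y * pi c y)))).
2:{ intros i _. rewrite Rmult_0_r, exp_0, Rmult_1_l, <- !sumN_mulr.
    apply sumN_ext. intros; ring. }
rewrite sumN_swap, (sumN_ext N _ (fun x => mu c x * (if Nat.eqb x y then 1 else 0))).
- apply sumN_kronecker. auto.
- intros x Hx. rewrite sumN_mull, phi_complete by auto. reflexivity.
Qed.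

Lemma chi2_psum : chi2 c = 1 + psum c M.
Proof.
destruct Hc as [_ [_ [_ [Hp [Hpi1 [_ [_ Hmu]]]]]]].
assert (E : d2sq c 0 = psum c M).
{ apply sumN_ext. intros. unfold d2sq_term. rewrite Rmult_0_r, exp_0. ring. }
rewrite <- E, <- d2_sum_sq. unfold chi2. fold N.
rewrite (sumN_ext N (fun y => (muH c 0 y / pi c y - 1) ^ 2 * pi c y)
  (fun y => mu c y ^ 2 / pi c y - 2 * mu c y + pi c y)).
- rewrite !sumN_add, sumN_sub, sumN_mull. fold N in Hmu, Hpi1. rewrite Hmu, Hpi1. ring.
- intros y Hy. rewrite muH_0 by auto. assert (0 < pi c y) by auto. field. lra.
Qed.

End SpectralExpansion.

Lemma exp_le_mono x y : x <= y -> exp x <= exp y.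
Proof. intros H. destruct (Req_dec x y) as [->|ne]; [lra|]. left. apply exp_increasing. lra. Qed.

Lemma exp_le_inv x y : exp x <= exp y -> x <= y.
Proof.
intros H. destruct (Rle_dec x y); auto.
assert (exp y < exp x) by (apply exp_increasing; lra). lra.
Qed.

Lemma exp_le1 x : x <= 0 -> exp x <= 1.
Proof. intros. rewrite <- exp_0. apply exp_le_mono. auto. Qed.

Lemma exp_neg_small B e : 0 < e -> exists X, 0 < X /\ forall y, X <= y -> B * exp (- y) <= e.
Proof.
intros He. assert (0 <= Rabs B) by apply Rabs_pos.
assert (0 <= Rabs B / e) by (apply Rmult_le_pos; [lra|left; apply Rinv_0_lt_compat; lra]).
exists (Rabs B / e + 1). split; [lra|]. intros y Hy.
assert (E1 := exp_ineq1_le y). rewrite exp_Ropp.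
assert (0 < exp y) by apply exp_pos.
apply Rle_trans with (Rabs B / exp y).
{ unfold Rdiv. apply Rmult_le_compat_r; [left; apply Rinv_0_lt_compat; lra|apply Rle_abs]. }
apply Rle_trans with (Rabs B / y).
{ unfold Rdiv. apply Rmult_le_compat_l; auto. apply Rinv_le_contravar; lra. }
apply Rmult_le_reg_r with (y / e); [apply Rdiv_lt_0_compat; lra|].
replace (Rabs B / y * (y / e)) with (Rabs B / e) by (field; lra).
replace (e * (y / e)) with y by (field; lra). lra.
Qed.

Lemma exp_large q : exists K, 0 < K /\ q < exp (2 * K).
Proof.
set (K := Rabs (ln (Rabs q + 1)) + 1).
assert (Hq : q <= Rabs q) by apply Rle_abs. assert (0 <= Rabs q) by apply Rabs_pos.
assert (Hl : ln (Rabs q + 1) <= Rabs (ln (Rabs q + 1))) by apply Rle_abs.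
assert (0 <= Rabs (ln (Rabs q + 1))) by apply Rabs_pos.
exists K. split; [unfold K; lra|].
apply Rlt_le_trans with (Rabs q + 1); [lra|].
rewrite <- (exp_ln (Rabs q + 1)) at 1 by lra. apply exp_le_mono. unfold K. lra.
Qed.

Lemma one_sub_exp_scale y r : 0 <= y -> 1 <= r -> 1 - exp (- (r * y)) <= 2 * r * (1 - exp (- y)).
Proof.
intros Hy Hr.
assert (E1 := exp_ineq1_le (- (r * y))).
assert (E2 := exp_ineq1_le y).
assert (Hey : 0 < exp y) by apply exp_pos.
assert (Hl : 1 - exp (- y) >= y / (1 + y)).
{ rewrite exp_Ropp. apply Rle_ge. apply Rmult_le_reg_r with ((1 + y) * exp y). nra.
  unfold Rdiv. replace (y * / (1 + y) * ((1 + y) * exp y)) with (y * exp y) by (field; lra).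
  replace ((1 - / exp y) * ((1 + y) * exp y)) with ((exp y - 1) * (1 + y)) by (field; lra). nra. }
assert (0 < exp (- (r * y))) by apply exp_pos.
destruct (Rle_dec y 1).
- assert (y / (1 + y) >= y / 2).
  { apply Rle_ge. unfold Rdiv. apply Rmult_le_compat_l; auto. apply Rinv_le_contravar; lra. }
  nra.
- assert (y / (1 + y) >= 1 / 2).
  { apply Rle_ge. apply Rmult_le_reg_r with (2 * (1 + y)). lra.
    unfold Rdiv. replace (y * / (1 + y) * (2 * (1 + y))) with (2 * y) by (field; lra). lra. }
  nra.
Qed.

Lemma affine_exp_neg_le x : 0 <= x -> (3 + 2 * x) * exp (- (2 * x)) <= 3 / (1 + x).
Proof.
intros Hx. assert (Ex := exp_ineq1_le x).
assert (E : exp (- (2 * x)) * (exp x * exp x) = 1)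
  by (rewrite <- !exp_plus; replace (- (2 * x) + (x + x)) with 0 by ring; apply exp_0).
assert (0 < exp (- (2 * x))) by apply exp_pos.
apply Rmult_le_reg_r with (1 + x); [lra|].
replace (3 / (1 + x) * (1 + x)) with 3 by (field; lra).
assert (exp (- (2 * x)) * ((1 + x) * (1 + x)) <= 1).
{ rewrite <- E. apply Rmult_le_compat_l; [lra|]. nra. }
nra.
Qed.

Lemma sqrt_le_iff x e : 0 <= x -> 0 < e -> (sqrt x <= e <-> x <= e ^ 2).
Proof.
intros Hx He. split; intros H.
- rewrite <- (pow2_sqrt x Hx). assert (0 <= sqrt x) by apply sqrt_pos. nra.
- rewrite <- (sqrt_pow2 e) by lra. apply sqrt_le_1_alt. auto.
Qed.

Lemma sqrt_gt_iff x e : 0 <= x -> 0 < e -> (e < sqrt x <-> e ^ 2 < x).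
Proof.
intros Hx He. assert (Hle := sqrt_le_iff x e Hx He). split; intros H.
- apply Rnot_le_lt. intros Hx2. apply Hle in Hx2. lra.
- apply Rnot_le_lt. intros Hx2. apply Hle in Hx2. lra.
Qed.

Lemma sqrt_lt_iff x e : 0 <= x -> 0 < e -> (sqrt x < e <-> x < e ^ 2).
Proof.
intros Hx He. assert (Hle := sqrt_le_iff x e Hx He).
split; intros H.
- apply Rnot_le_lt. intros Hx2. assert (sqrt (e ^ 2) <= sqrt x) by (apply sqrt_le_1_alt; auto).
  rewrite sqrt_pow2 in * by lra. lra.
- rewrite <- (sqrt_pow2 e) by lra. apply sqrt_lt_1_alt. split; auto.
Qed.

Lemma div_mul_le K a b : 0 <= K -> 0 < a -> a <= b -> K / b * a <= K.
Proof.
intros HK Ha Hab. unfold Rdiv. rewrite Rmult_assoc. rewrite <- (Rmult_1_r K) at 2.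
apply Rmult_le_compat_l; [lra|]. apply Rmult_le_reg_l with b; [lra|].
rewrite <- Rmult_assoc, Rinv_r by lra. lra.
Qed.

Lemma continuity_sumN n (h : nat -> R -> R) :
  (forall i, continuity (h i)) -> continuity (fun t => sumN n (fun i => h i t)).
Proof.
induction n; intros H; simpl.
- apply continuity_const. intros x y; auto.
- apply (continuity_plus (fun t => sumN n (fun i => h i t)) (h n)); auto.
Qed.

(* The infimum of the superlevel set [{t >= 0 | e < g t}] is the first time
   [g] drops to [e]; continuity puts it in the sublevel set. *)
Lemma antimono_sublevel_min (g : R -> R) e B :
  continuity g -> (forall s t, s <= t -> g t <= g s) -> 0 <= B -> g B <= e ->
  exists T, 0 <= T /\ g T <= e /\ forall t, 0 <= t -> g t <= e -> T <= t.
Proof.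
intros Hcont Hmono HB HgB.
destruct (Rle_dec (g 0) e) as [H0|H0].
{ exists 0. repeat split; auto; lra. }
set (E := fun t => 0 <= t /\ e < g t).
assert (HEb : bound E).
{ exists B. intros t [Ht1 Ht2]. destruct (Rle_dec t B) as [|n]; auto.
  assert (g t <= g B) by (apply Hmono; lra). lra. }
destruct (completeness E HEb (ex_intro _ 0 (conj (Rle_refl 0) (Rnot_le_lt _ _ H0))))
  as [m [Hub Hlub]].
assert (Hm0 : 0 <= m) by (apply Hub; split; lra).
exists m. split; [auto|split].
- destruct (Rle_dec (g m) e) as [|Hgt]; auto. exfalso.
  destruct (Hcont m (g m - e)) as [del [Hdel Hd]]; [lra|].
  specialize (Hd (m + del / 2)). simpl in Hd. unfold Rdist in Hd.
  assert (Hnear : Rabs (g (m + del / 2) - g m) < g m - e).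
  { apply Hd. split; [split; [constructor|lra]|].
    replace (m + del / 2 - m) with (del / 2) by ring. rewrite Rabs_pos_eq; lra. }
  apply Rabs_def2 in Hnear.
  assert (m + del / 2 <= m) by (apply Hub; split; lra). lra.
- intros t Ht Hgt. apply Hlub. intros s [Hs1 Hs2].
  destruct (Rle_dec s t) as [|n]; auto.
  assert (g s <= g t) by (apply Hmono; lra). lra.
Qed.

Definition eventually (P : nat -> Prop) := exists N0, forall n, (N0 <= n)%nat -> P n.

Lemma eventually_and P Q : eventually P -> eventually Q -> eventually (fun n => P n /\ Q n).
Proof.
intros [N1 H1] [N2 H2]. exists (N1 + N2)%nat. intros n Hn. split; [apply H1|apply H2]; lia.
Qed.

Lemma eventually_impl (P Q : nat -> Prop) : eventually P -> (forall n, P n -> Q n) -> eventually Q.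
Proof. intros [N1 H1] H. exists N1. intros n Hn. apply H, H1, Hn. Qed.

Lemma cv_infty_eventually u Mt : cv_infty u -> eventually (fun n => Mt < u n).
Proof. intros H. destruct (H Mt) as [N0 H0]. exists N0. auto. Qed.

Lemma cv_infty_le (u v : nat -> R) : cv_infty u -> eventually (fun n => u n <= v n) -> cv_infty v.
Proof.
intros Hu Hv Mt. destruct (eventually_and _ _ (cv_infty_eventually u Mt Hu) Hv) as [N0 H0].
exists N0. intros n Hn. destruct (H0 n Hn). lra.
Qed.

Lemma jsearch_bounds f cc j fuel : (j <= jsearch f cc j fuel <= j + fuel)%nat.
Proof.
revert j. induction fuel; intros j; simpl; [lia|].
destruct (Rlt_dec cc (f j)); [lia|]. specialize (IHfuel (S j)). lia.
Qed.

Lemma jsearch_before f cc j fuel k : (j <= k < jsearch f cc j fuel)%nat -> ~ cc < f k.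
Proof.
revert j. induction fuel; intros j Hk; simpl in *; [lia|].
destruct (Rlt_dec cc (f j)); [lia|]. destruct (Nat.eq_dec k j) as [->|ne]; auto.
apply (IHfuel (S j)). lia.
Qed.

Lemma jsearch_found f cc j fuel : (jsearch f cc j fuel < j + fuel)%nat -> cc < f (jsearch f cc j fuel).
Proof.
revert j. induction fuel; intros j Hk; simpl in *; [lia|].
destruct (Rlt_dec cc (f j)); auto. apply IHfuel. lia.
Qed.

Lemma maxfrom_ub g j fuel k : (j <= k <= j + fuel)%nat -> g k <= maxfrom g j fuel.
Proof.
revert j. induction fuel; intros j Hk; simpl.
- replace k with j by lia. lra.
- destruct (Nat.eq_dec k j) as [->|ne]; [apply Rmax_l|].
  eapply Rle_trans; [apply (IHfuel (S j)); lia|apply Rmax_r].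
Qed.

Lemma maxfrom_attained g j fuel : exists k, (j <= k <= j + fuel)%nat /\ maxfrom g j fuel = g k.
Proof.
revert j. induction fuel; intros j; simpl.
- exists j. split; [lia|auto].
- destruct (IHfuel (S j)) as [k [Hk E]]. apply Rmax_case.
  + exists j. split; [lia|auto].
  + exists k. split; [lia|auto].
Qed.

Section ProfileBasics.
Variable c : chain.
Let M := (sz c - 1)%nat.

Lemma psum_S j : psum c (S j) = psum c j + mu_phi c (S j) ^ 2.
Proof. reflexivity. Qed.

Lemma psum_ge0 j : 0 <= psum c j.
Proof. unfold psum. apply sumN_ge0. intros. apply pow2_ge_0. Qed.

Lemma psum_le j k : (j <= k)%nat -> psum c j <= psum c k.
Proof. intros H. unfold psum. apply sumN_le_prefix; auto. intros. apply pow2_ge_0. Qed.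

Lemma d2sq_term_ge0 i t : 0 <= d2sq_term c i t.
Proof.
unfold d2sq_term. assert (0 < exp (-2 * lam c (S i) * t)) by apply exp_pos.
assert (Ha := pow2_ge_0 (mu_phi c (S i))). nra.
Qed.

Lemma d2sq_ge0 t : 0 <= d2sq c t.
Proof. unfold d2sq; fold M. apply sumN_ge0. intros; apply d2sq_term_ge0. Qed.

Lemma jn_spec cc : 0 < cc -> cc < psum c M ->
  (1 <= jn c cc <= M)%nat /\ cc < psum c (jn c cc) /\ psum c (jn c cc - 1) <= cc.
Proof.
intros H0 H1. unfold jn. fold M.
pose proof (jsearch_bounds (psum c) cc 1 M) as Hb.
set (j0 := jsearch (psum c) cc 1 M) in *.
assert (HM1 : (1 <= M)%nat). { destruct (Nat.eq_dec M 0) as [E|NE]; [rewrite E in H1; unfold psum in H1; simpl in H1; lra|lia]. }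
assert (Hlt : (j0 < 1 + M)%nat).
{ destruct (Nat.eq_dec j0 (1 + M)) as [E|ne]; [|lia].
  exfalso. apply (jsearch_before (psum c) cc 1 M M); [fold j0; lia|auto]. }
split; [lia|]. split. apply jsearch_found. fold j0. lia.
destruct (Nat.eq_dec j0 1) as [E|ne].
- rewrite E. unfold psum. simpl. lra.
- apply Rnot_lt_le. apply (jsearch_before (psum c) cc 1 M). fold j0. lia.
Qed.

Lemma jn_le c1 c2 : 0 < c1 -> c1 <= c2 -> c2 < psum c M -> (jn c c1 <= jn c c2)%nat.
Proof.
intros H0 H1 H2.
destruct (jn_spec c2) as [B2 [L2 _]]; [lra|auto|].
destruct (Nat.le_gt_cases (jn c c1) (jn c c2)) as [|Hlt]; auto.
exfalso. unfold jn in Hlt. apply (jsearch_before (psum c) c1 1 (sz c - 1) (jn c c2)).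
split; [lia|auto]. fold (jn c c2) in *. lra.
Qed.

Definition tau_ratio (j : nat) := ln (1 + psum c j) / (2 * lam c j).

Lemma taun_maxfrom cc : taun c cc = maxfrom tau_ratio (jn c cc) (M - jn c cc).
Proof. reflexivity. Qed.

Lemma taun_antimono c1 c2 : 0 < c1 -> c1 <= c2 -> c2 < psum c M -> taun c c2 <= taun c c1.
Proof.
intros H0 H1 H2. assert (Hj := jn_le c1 c2 H0 H1 H2).
destruct (jn_spec c2) as [B2 _]; [lra|auto|].
rewrite (taun_maxfrom c2). destruct (maxfrom_attained tau_ratio (jn c c2) (M - jn c c2)) as [k [Hk E]].
rewrite E. rewrite taun_maxfrom. apply maxfrom_ub. lia.
Qed.

(* The profile split at the eigenvalue [lam c j0], which opens the tail. *)
Definition d2sq_head j0 t := sumN (j0 - 1) (fun i => d2sq_term c i t).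

Definition d2sq_tail j0 t := sumN (M - (j0 - 1)) (fun i => d2sq_term c (j0 - 1 + i) t).

Lemma d2sq_split j0 t : (1 <= j0 <= M)%nat -> d2sq c t = d2sq_head j0 t + d2sq_tail j0 t.
Proof.
intros H. unfold d2sq; fold M. unfold d2sq_head, d2sq_tail.
replace M with ((j0 - 1) + (M - (j0 - 1)))%nat at 1 by lia. apply sumN_cat.
Qed.

Lemma d2sq_head_ge0 j0 t : 0 <= d2sq_head j0 t.
Proof. apply sumN_ge0. intros; apply d2sq_term_ge0. Qed.

Lemma d2sq_tail_le j0 t : (1 <= j0 <= M)%nat -> d2sq_tail j0 t <= d2sq c t.
Proof. intros H. rewrite (d2sq_split j0 t H). assert (H1 := d2sq_head_ge0 j0 t). lra. Qed.

End ProfileBasics.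

Section DecayProfile.
Variable c : chain.
Let M := (sz c - 1)%nat.
Hypothesis Hlam_mono : forall i k, (1 <= i)%nat -> (i <= k)%nat -> (k <= M)%nat -> lam c i <= lam c k.
Hypothesis Hlam1_pos : (1 <= M)%nat -> 0 < lam c 1.

Lemma lam_pos i : (1 <= i <= M)%nat -> 0 < lam c i.
Proof.
intros H. assert (0 < lam c 1) by (apply Hlam1_pos; lia).
assert (lam c 1 <= lam c i) by (apply Hlam_mono; lia). lra.
Qed.

Lemma taun_spec cc : 0 < cc -> cc < psum c M ->
  (forall k, (jn c cc <= k <= M)%nat -> 1 + psum c k <= exp (2 * lam c k * taun c cc)) /\
  (exists k, (jn c cc <= k <= M)%nat /\ 1 + psum c k = exp (2 * lam c k * taun c cc)) /\
  0 <= taun c cc.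
Proof.
intros H0 H1. destruct (jn_spec c cc H0 H1) as [Hj [Hc1 Hc2]].
rewrite taun_maxfrom; fold M.
assert (Ha : forall k, (jn c cc <= k <= M)%nat -> 1 + psum c k <= exp (2 * lam c k * maxfrom (tau_ratio c) (jn c cc) (M - jn c cc))).
{ intros k Hk. assert (Hg := maxfrom_ub (tau_ratio c) (jn c cc) (M - jn c cc) k ltac:(lia)).
  unfold tau_ratio in Hg. assert (Hl : 0 < lam c k) by (apply lam_pos; lia).
  assert (Hp := psum_ge0 c k).
  rewrite <- (exp_ln (1 + psum c k)) by lra. apply exp_le_mono.
  apply Rmult_le_compat_r with (r := 2 * lam c k) in Hg; [|lra].
  unfold Rdiv in Hg. rewrite Rmult_assoc, Rinv_l in Hg by lra. unfold tau_ratio. lra. }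
split; [auto|]. split.
- destruct (maxfrom_attained (tau_ratio c) (jn c cc) (M - jn c cc)) as [k [Hk E]].
  exists k. split; [lia|]. rewrite E. unfold tau_ratio.
  assert (Hl : 0 < lam c k) by (apply lam_pos; lia). assert (Hp := psum_ge0 c k).
  replace (2 * lam c k * (ln (1 + psum c k) / (2 * lam c k))) with (ln (1 + psum c k)) by (field; lra).
  rewrite exp_ln by lra. auto.
- assert (H := Ha (jn c cc) ltac:(lia)). assert (Hp := psum_ge0 c (jn c cc)).
  assert (Hl : 0 < lam c (jn c cc)) by (apply lam_pos; lia).
  assert (0 <= 2 * lam c (jn c cc) * maxfrom (tau_ratio c) (jn c cc) (M - jn c cc)).
  { apply exp_le_inv. rewrite exp_0. lra. }
  nra.
Qed.

Lemma d2sq_ge_psum t k : 0 <= t -> (1 <= k <= M)%nat -> psum c k * exp (-2 * lam c k * t) <= d2sq c t.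
Proof.
intros Ht Hk. unfold d2sq; fold M.
apply Rle_trans with (sumN k (fun i => d2sq_term c i t)).
2:{ apply sumN_le_prefix; [intros; apply d2sq_term_ge0|lia]. }
unfold psum. rewrite <- sumN_mulr. apply sumN_le. intros i Hi. unfold d2sq_term.
apply Rmult_le_compat_l. apply pow2_ge_0. apply exp_le_mono.
assert (lam c (S i) <= lam c k) by (apply Hlam_mono; lia). nra.
Qed.

Lemma d2sq_lower cc t : 0 < cc -> cc < psum c M -> 0 <= t -> t <= taun c cc ->
  cc / (1 + cc) * exp (2 * lam c (jn c cc) * (taun c cc - t)) <= d2sq c t.
Proof.
intros H0 H1 Ht Ht2. destruct (jn_spec c cc H0 H1) as [Hj [Hc1 Hc2]].
destruct (taun_spec cc H0 H1) as [_ [[k [Hk Ek]] Htau]].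
set (tau := taun c cc) in *.
eapply Rle_trans; [|apply (d2sq_ge_psum t k); auto; lia].
assert (Hpk : psum c (jn c cc) <= psum c k) by (apply psum_le; lia).
assert (Hlk : lam c (jn c cc) <= lam c k) by (apply Hlam_mono; lia).
assert (E2 : psum c k * exp (-2 * lam c k * t) = psum c k / (1 + psum c k) * exp (2 * lam c k * (tau - t))).
{ replace (2 * lam c k * (tau - t)) with (2 * lam c k * tau + -2 * lam c k * t) by ring.
  rewrite exp_plus. rewrite <- Ek. field. lra. }
rewrite E2. apply Rmult_le_compat.
- apply Rlt_le. apply Rdiv_lt_0_compat; lra.
- left; apply exp_pos.
- apply Rmult_le_reg_r with ((1 + cc) * (1 + psum c k)). nra.
  unfold Rdiv. replace (cc * / (1 + cc) * ((1 + cc) * (1 + psum c k))) with (cc * (1 + psum c k)) by (field; lra).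
  replace (psum c k * / (1 + psum c k) * ((1 + cc) * (1 + psum c k))) with (psum c k * (1 + cc)) by (field; lra).
  nra.
- apply exp_le_mono. assert (0 <= lam c (jn c cc)) by (left; apply lam_pos; lia). nra.
Qed.

Lemma d2sq_prefix_le_psum p t : 0 <= t -> (p <= M)%nat -> sumN p (fun i => d2sq_term c i t) <= psum c p.
Proof.
intros Ht Hp. unfold psum. apply sumN_le. intros i Hi. unfold d2sq_term.
assert (Hl : 0 < lam c (S i)) by (apply lam_pos; lia).
assert (exp (-2 * lam c (S i) * t) <= 1) by (apply exp_le1; nra).
assert (Ha := pow2_ge_0 (mu_phi c (S i))). nra.
Qed.

Lemma d2sq_head_le_psum j0 t : 0 <= t -> (1 <= j0 <= M)%nat -> d2sq_head c j0 t <= psum c (j0 - 1).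
Proof. intros. apply d2sq_prefix_le_psum; auto. lia. Qed.

Lemma d2sq_head_le j0 k t : 0 <= t -> (1 <= k)%nat -> (k <= j0)%nat -> (j0 <= M)%nat ->
  d2sq_head c j0 t <= psum c (k - 1) + psum c (j0 - 1) * exp (-2 * lam c k * t).
Proof.
intros Ht Hk Hkj HjM. unfold d2sq_head.
replace (j0 - 1)%nat with ((k - 1) + (j0 - k))%nat by lia.
rewrite sumN_cat. unfold psum at 2. rewrite sumN_cat. fold (psum c (k - 1)).
assert (H1 : sumN (k - 1) (fun i => d2sq_term c i t) <= psum c (k - 1)) by (apply d2sq_prefix_le_psum; auto; lia).
assert (H2 : sumN (j0 - k) (fun i => d2sq_term c (k - 1 + i) t) <=
   sumN (j0 - k) (fun i => mu_phi c (S (k - 1 + i)) ^ 2) * exp (-2 * lam c k * t)).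
{ rewrite <- sumN_mulr. apply sumN_le. intros i Hi. unfold d2sq_term.
  apply Rmult_le_compat_l. apply pow2_ge_0. apply exp_le_mono.
  assert (lam c k <= lam c (S (k - 1 + i))) by (apply Hlam_mono; lia). nra. }
assert (Hp := psum_ge0 c (k - 1)). assert (He : 0 < exp (-2 * lam c k * t)) by apply exp_pos.
assert (0 <= psum c (k - 1) * exp (-2 * lam c k * t)) by nra.
unfold psum in *. lra.
Qed.

Lemma d2sq_tail_decay j0 t s : 0 <= s -> (1 <= j0 <= M)%nat ->
  d2sq_tail c j0 (t + s) <= exp (-2 * lam c j0 * s) * d2sq_tail c j0 t.
Proof.
intros Hs Hj. unfold d2sq_tail. rewrite <- sumN_mull. apply sumN_le. intros i Hi. unfold d2sq_term.
replace (-2 * lam c (S (j0 - 1 + i)) * (t + s)) with (-2 * lam c (S (j0 - 1 + i)) * t + -2 * lam c (S (j0 - 1 + i)) * s) by ring.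
rewrite exp_plus.
assert (exp (-2 * lam c (S (j0 - 1 + i)) * s) <= exp (-2 * lam c j0 * s)).
{ apply exp_le_mono. assert (lam c j0 <= lam c (S (j0 - 1 + i))) by (apply Hlam_mono; lia). nra. }
assert (Ha := pow2_ge_0 (mu_phi c (S (j0 - 1 + i)))). assert (0 < exp (-2 * lam c (S (j0 - 1 + i)) * t)) by apply exp_pos.
assert (0 < exp (-2 * lam c (S (j0 - 1 + i)) * s)) by apply exp_pos.
assert (0 <= mu_phi c (S (j0 - 1 + i)) ^ 2 * exp (-2 * lam c (S (j0 - 1 + i)) * t)) by nra.
nra.
Qed.

Lemma d2sq_antimono t t' : t <= t' -> d2sq c t' <= d2sq c t.
Proof.
intros H. unfold d2sq; fold M. apply sumN_le. intros i Hi. unfold d2sq_term.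
apply Rmult_le_compat_l. apply pow2_ge_0. apply exp_le_mono.
assert (0 < lam c (S i)) by (apply lam_pos; lia). nra.
Qed.

(* Abel summation against the increments of [psum]: with [t = tau + u],
   [1 + psum c k <= exp (2 lam_k tau)] turns each weight into a decay
   [exp (-2 lam_k u)], and each gap between consecutive eigenvalues costs
   at most the factor [2 t / u] (by [one_sub_exp_scale]). *)
Lemma d2sq_tail_prefix_le j0 tau u d : (1 <= j0)%nat -> (j0 + d <= M)%nat -> 0 <= tau -> 0 < u ->
  (forall k, (j0 <= k <= M)%nat -> 1 + psum c k <= exp (2 * lam c k * tau)) ->
  sumN (S d) (fun i => d2sq_term c (j0 - 1 + i) (tau + u))
  <= psum c (j0 + d) * exp (-2 * lam c (j0 + d) * (tau + u))
     + 2 * ((tau + u) / u) * (exp (-2 * lam c j0 * u) - exp (-2 * lam c (j0 + d) * u)).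
Proof.
intros Hj Hd Htau Hu Hk.
set (t := tau + u). set (r := t / u).
assert (Hr : 1 <= r).
{ unfold r, t. apply Rmult_le_reg_r with u; auto. unfold Rdiv. rewrite Rmult_assoc, Rinv_l by lra. lra. }
induction d as [|d IH].
- replace (j0 + 0)%nat with j0 by lia. simpl. unfold d2sq_term.
  replace (S (j0 - 1 + 0)) with j0 by lia.
  replace (psum c j0) with (psum c (j0 - 1) + mu_phi c j0 ^ 2)
    by (destruct j0 as [|j]; [lia|]; replace (S j - 1)%nat with j by lia; reflexivity).
  assert (Hp := psum_ge0 c (j0 - 1)). assert (0 < exp (-2 * lam c j0 * t)) by apply exp_pos.
  nra.
- specialize (IH ltac:(lia)).
  change (sumN (S (S d)) (fun i => d2sq_term c (j0 - 1 + i) t))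
    with (sumN (S d) (fun i => d2sq_term c (j0 - 1 + i) t) + d2sq_term c (j0 - 1 + S d) t).
  set (K := (j0 + d)%nat) in *.
  replace (j0 - 1 + S d)%nat with K by lia. replace (j0 + S d)%nat with (S K) by lia.
  rewrite psum_S. unfold d2sq_term at 2.
  set (gap := lam c (S K) - lam c K).
  assert (Hgap : 0 <= gap) by (assert (lam c K <= lam c (S K)) by (apply Hlam_mono; lia); unfold gap; lra).
  set (X := exp (-2 * lam c K * t)). set (Y := exp (-2 * gap * t)).
  set (U := exp (-2 * lam c K * u)). set (V := exp (-2 * gap * u)).
  assert (EX : exp (-2 * lam c (S K) * t) = X * Y)
    by (unfold X, Y; rewrite <- exp_plus; f_equal; unfold gap; ring).
  assert (EU : exp (-2 * lam c (S K) * u) = U * V)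
    by (unfold U, V; rewrite <- exp_plus; f_equal; unfold gap; ring).
  rewrite EX, EU.
  assert (Hweight : psum c K * X <= U).
  { assert (HW : 1 + psum c K <= exp (2 * lam c K * tau)) by (apply Hk; lia).
    assert (EW : exp (2 * lam c K * tau) * X = U)
      by (unfold X, U; rewrite <- exp_plus; f_equal; unfold t; ring).
    assert (0 < X) by apply exp_pos. nra. }
  assert (HY : Y <= 1) by (apply exp_le1; assert (0 < t) by (unfold t; lra); nra).
  assert (Hscale : 1 - Y <= 2 * r * (1 - V)).
  { unfold Y, V. replace (-2 * gap * t) with (- (r * (2 * gap * u))) by (unfold r; field; lra).
    replace (-2 * gap * u) with (- (2 * gap * u)) by ring. apply one_sub_exp_scale; nra. }
  assert (0 < U) by apply exp_pos. assert (0 < X) by apply exp_pos.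
  assert (Ha := pow2_ge_0 (mu_phi c (S K))). assert (Hp := psum_ge0 c K).
  assert (psum c K * X * (1 - Y) <= U * (2 * r * (1 - V))).
  { apply Rle_trans with (U * (1 - Y)); [apply Rmult_le_compat_r|apply Rmult_le_compat_l]; lra. }
  fold X U in IH. nra.
Qed.

Lemma d2sq_tail_le_abel j0 tau u : (1 <= j0 <= M)%nat -> 0 <= tau -> 0 < u ->
  (forall k, (j0 <= k <= M)%nat -> 1 + psum c k <= exp (2 * lam c k * tau)) ->
  d2sq_tail c j0 (tau + u) <= (1 + 2 * (tau + u) / u) * exp (-2 * lam c j0 * u).
Proof.
intros Hj Htau Hu Hk.
assert (Hprefix := d2sq_tail_prefix_le j0 tau u (M - j0) ltac:(lia) ltac:(lia) Htau Hu Hk).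
replace (S (M - j0)) with (M - (j0 - 1))%nat in Hprefix by lia.
replace (j0 + (M - j0))%nat with M in Hprefix by lia.
unfold d2sq_tail. eapply Rle_trans; [exact Hprefix|].
assert (HW : 1 + psum c M <= exp (2 * lam c M * tau)) by (apply Hk; lia).
assert (EW : exp (2 * lam c M * tau) * exp (-2 * lam c M * (tau + u)) = exp (-2 * lam c M * u))
  by (rewrite <- exp_plus; f_equal; ring).
assert (HM : exp (-2 * lam c M * u) <= exp (-2 * lam c j0 * u)).
{ apply exp_le_mono. assert (lam c j0 <= lam c M) by (apply Hlam_mono; lia). nra. }
assert (0 < exp (-2 * lam c M * (tau + u))) by apply exp_pos.
assert (0 < exp (-2 * lam c M * u)) by apply exp_pos.
assert (1 <= (tau + u) / u)
  by (apply Rmult_le_reg_r with u; auto; unfold Rdiv; rewrite Rmult_assoc, Rinv_l by lra; lra).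
assert (psum c M * exp (-2 * lam c M * (tau + u)) <= exp (-2 * lam c M * u)) by nra.
replace (2 * (tau + u) / u) with (2 * ((tau + u) / u)) by (unfold Rdiv; ring).
nra.
Qed.

Lemma d2sq_head_small c' cc t : 0 < c' -> c' <= cc -> cc < psum c M -> 0 <= t ->
  d2sq_head c (jn c cc) t <= c' + cc * exp (-2 * lam c (jn c c') * t).
Proof.
intros H0 H1 H2 Ht.
destruct (jn_spec c cc ltac:(fold M; lra) H2) as [Hj [_ Hj1]].
destruct (jn_spec c c' H0 ltac:(fold M; lra)) as [Hk [_ Hk1]].
assert (Hkj := jn_le c c' cc H0 H1 H2).
assert (HB := d2sq_head_le (jn c cc) (jn c c') t Ht ltac:(lia) Hkj ltac:(lia)).
assert (0 < exp (-2 * lam c (jn c c') * t)) by apply exp_pos.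
assert (psum c (jn c cc - 1) * exp (-2 * lam c (jn c c') * t) <= cc * exp (-2 * lam c (jn c c') * t))
  by (apply Rmult_le_compat_r; lra).
lra.
Qed.

Lemma d2sq_le_tau_add cc u : 0 < cc -> cc < psum c M -> 0 < u ->
  d2sq c (taun c cc + u) <= cc + (1 + 2 * (taun c cc + u) / u) * exp (-2 * lam c (jn c cc) * u).
Proof.
intros Hc HcM Hu.
destruct (jn_spec c cc Hc HcM) as [Hj [_ Hj1]]. destruct (taun_spec cc Hc HcM) as [Hk [_ Ht0]].
rewrite (d2sq_split c (jn c cc)) by auto.
assert (Hhead := d2sq_head_le_psum (jn c cc) (taun c cc + u) ltac:(lra) Hj).
assert (Htail := d2sq_tail_le_abel (jn c cc) (taun c cc) u Hj Ht0 Hu Hk).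
lra.
Qed.

Lemma d2sq_le_tau_add_sharp c' cc u : 0 < c' -> c' <= cc -> cc < psum c M -> 0 < u ->
  d2sq c (taun c cc + u) <= c' + cc * exp (-2 * lam c (jn c c') * (taun c cc + u))
    + (1 + 2 * (taun c cc + u) / u) * exp (-2 * lam c (jn c cc) * u).
Proof.
intros H0 H1 HcM Hu.
destruct (jn_spec c cc ltac:(fold M; lra) HcM) as [Hj _]. destruct (taun_spec cc ltac:(fold M; lra) HcM) as [Hk [_ Ht0]].
rewrite (d2sq_split c (jn c cc)) by auto.
assert (Hhead := d2sq_head_small c' cc (taun c cc + u) H0 H1 HcM ltac:(lra)).
assert (Htail := d2sq_tail_le_abel (jn c cc) (taun c cc) u Hj Ht0 Hu Hk).
lra.
Qed.

Lemma d2sq_le_shift c' cc t s : 0 < c' -> c' <= cc -> cc < psum c M -> 0 <= t -> 0 <= s ->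
  d2sq c (t + s) <= c' + cc * exp (-2 * lam c (jn c c') * (t + s))
    + exp (-2 * lam c (jn c cc) * s) * d2sq c t.
Proof.
intros H0 H1 HcM Ht Hs.
destruct (jn_spec c cc ltac:(fold M; lra) HcM) as [Hj _].
rewrite (d2sq_split c (jn c cc)) by auto.
assert (Hhead := d2sq_head_small c' cc (t + s) H0 H1 HcM ltac:(lra)).
assert (Htail := d2sq_tail_decay (jn c cc) t s Hs Hj).
assert (Htail_le := d2sq_tail_le c (jn c cc) t Hj).
assert (0 < exp (-2 * lam c (jn c cc) * s)) by apply exp_pos.
assert (exp (-2 * lam c (jn c cc) * s) * d2sq_tail c (jn c cc) t
  <= exp (-2 * lam c (jn c cc) * s) * d2sq c t) by (apply Rmult_le_compat_l; lra).
lra.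
Qed.

(* With [x = sqrt (tau lam_j)], the window [sqrt (tau / lam_j) = x / lam_j] turns the
   tail bound into [(3 + 2 x) exp (-2 x)]. *)
Lemma d2sq_le_tau_add_sqrt c' cc : 0 < c' -> c' <= cc -> cc < psum c M -> 0 < taun c cc ->
  d2sq c (taun c cc + sqrt (taun c cc / lam c (jn c cc)))
  <= c' + cc * exp (-2 * lam c (jn c c') * (taun c cc + sqrt (taun c cc / lam c (jn c cc))))
     + 3 / (1 + sqrt (taun c cc * lam c (jn c cc))).
Proof.
intros H0 H1 HcM Hta.
destruct (jn_spec c cc ltac:(fold M; lra) HcM) as [Hj _].
assert (Hl : 0 < lam c (jn c cc)) by (apply lam_pos; lia).
set (ta := taun c cc) in *. set (l := lam c (jn c cc)) in *.
set (x := sqrt (ta * l)).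
assert (Hx0 : 0 < x) by (apply sqrt_lt_R0; nra).
assert (Hxx : x * x = ta * l) by (apply sqrt_sqrt; nra).
assert (Hs : sqrt (ta / l) = x / l).
{ rewrite <- (sqrt_pow2 (x / l)) by (apply Rlt_le, Rdiv_lt_0_compat; lra). f_equal.
  replace ((x / l) ^ 2) with (x * x / (l * l)) by (field; lra). rewrite Hxx. field. lra. }
rewrite Hs.
assert (Hup := d2sq_le_tau_add_sharp c' cc (x / l) H0 H1 HcM ltac:(apply Rdiv_lt_0_compat; lra)).
fold ta l in Hup.
replace (1 + 2 * (ta + x / l) / (x / l)) with (3 + 2 * x)
  in Hup by (replace ta with (x * x / l) by (rewrite Hxx; field; lra); field; lra).
replace (-2 * l * (x / l)) with (- (2 * x)) in Hup by (field; lra).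
assert (Hexp := affine_exp_neg_le x (Rlt_le _ _ Hx0)).
lra.
Qed.

End DecayProfile.

Definition spectral_chain (c : chain) : Prop := rev_chain c /\ spectral_data c.

Lemma spectral_lam_le c : spectral_chain c ->
  forall i k, (1 <= i)%nat -> (i <= k)%nat -> (k <= sz c - 1)%nat -> lam c i <= lam c k.
Proof.
intros [[Hsz _] [_ [_ [_ [_ [_ Hm]]]]]] i k H1 H2 H3. apply Hm; lia.
Qed.

Lemma spectral_lam1_pos c : spectral_chain c -> (1 <= sz c - 1)%nat -> 0 < lam c 1.
Proof. intros [_ [_ [_ [_ [_ [Hp _]]]]]] H. apply Hp. lia. Qed.

Lemma spectral_d2 c t : spectral_chain c -> Defs.d2 c t = sqrt (d2sq c t).
Proof. intros [Hc Hs]. apply d2_sqrt_d2sq; auto. Qed.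

Lemma spectral_chi2 c : spectral_chain c -> chi2 c = 1 + psum c (sz c - 1).
Proof. intros [Hc Hs]. apply chi2_psum; auto. Qed.

Lemma d2sq_continuity c : continuity (d2sq c).
Proof.
unfold d2sq. apply (continuity_sumN _ (fun i t => d2sq_term c i t)).
intros i. unfold d2sq_term. reg.
Qed.

Section SpectralChain.
Variable c : chain.
Hypothesis Hc : spectral_chain c.
Let M := (sz c - 1)%nat.
Let Hlam_mono := spectral_lam_le c Hc.
Let Hlam1_pos := spectral_lam1_pos c Hc.

Lemma d2sq_decay t : 0 <= t -> (1 <= M)%nat -> d2sq c t <= exp (-2 * lam c 1 * t) * d2sq c 0.
Proof.
intros Ht HM1.
rewrite (d2sq_split c 1 t), (d2sq_split c 1 0) by lia.
unfold d2sq_head. simpl. rewrite !Rplus_0_l.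
replace t with (0 + t) at 1 by ring. apply d2sq_tail_decay; auto; lia.
Qed.

Lemma d2sq_eventually_le e : 0 < e -> exists B, 0 <= B /\ d2sq c B <= e.
Proof.
intros He. destruct (Nat.le_gt_cases M 0) as [HM0|HM1].
- exists 0. split; [lra|]. unfold d2sq. fold M. replace M with 0%nat by lia. simpl. lra.
- assert (Hl1 : 0 < lam c 1) by (apply Hlam1_pos; lia).
  destruct (exp_neg_small (d2sq c 0) e He) as [X [HX HXe]].
  assert (HB : 0 < X / (2 * lam c 1)) by (apply Rdiv_lt_0_compat; lra).
  exists (X / (2 * lam c 1)). split; [lra|].
  eapply Rle_trans; [apply d2sq_decay; [lra|lia]|].
  replace (-2 * lam c 1 * (X / (2 * lam c 1))) with (- X) by (field; lra).
  rewrite Rmult_comm. apply HXe. lra.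
Qed.

Lemma T2_spec eps : 0 < eps ->
  0 <= T2 c eps /\ d2sq c (T2 c eps) <= eps ^ 2 /\
  forall t, 0 <= t -> d2sq c t <= eps ^ 2 -> T2 c eps <= t.
Proof.
intros He.
assert (Hd2 : forall t, Defs.d2 c t <= eps <-> d2sq c t <= eps ^ 2).
{ intros t. rewrite spectral_d2 by auto. apply sqrt_le_iff; [apply d2sq_ge0|auto]. }
assert (Hex : exists T, 0 <= T /\ Defs.d2 c T <= eps /\
  forall t, 0 <= t -> Defs.d2 c t <= eps -> T <= t).
{ destruct (d2sq_eventually_le (eps ^ 2)) as [B [HB HBe]]; [nra|].
  destruct (antimono_sublevel_min (d2sq c) (eps ^ 2) B (d2sq_continuity c)
    (d2sq_antimono c Hlam_mono Hlam1_pos) HB HBe) as [T [H1 [H2 H3]]].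
  exists T. rewrite Hd2. repeat split; auto. intros t Ht. rewrite Hd2. auto. }
destruct (epsilon_spec (inhabits 0) _ Hex) as [H1 [H2 H3]]. fold (T2 c eps) in H1, H2, H3.
rewrite Hd2 in H2. repeat split; auto. intros t Ht. rewrite <- Hd2. auto.
Qed.

Lemma T2_ge_of_lt eps t : 0 < eps -> eps ^ 2 < d2sq c t -> t <= T2 c eps.
Proof.
intros He H. destruct (T2_spec eps He) as [_ [H2 _]].
destruct (Rle_dec t (T2 c eps)) as [|n]; auto. exfalso.
assert (d2sq c t <= d2sq c (T2 c eps)) by (apply (d2sq_antimono c Hlam_mono Hlam1_pos); lra). lra.
Qed.

Lemma T2_le_of_le eps t : 0 < eps -> 0 <= t -> d2sq c t <= eps ^ 2 -> T2 c eps <= t.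
Proof. intros He. apply (T2_spec eps He). Qed.

End SpectralChain.

Section Family.
Variable F : nat -> chain.
Hypothesis Hspec : forall n, spectral_chain (F n).
Hypothesis Hchi : cv_infty (fun n => chi2 (F n)).

Let Hlam_mono_n n := spectral_lam_le (F n) (Hspec n).
Let Hlam1_pos_n n := spectral_lam1_pos (F n) (Hspec n).
Let psumM n := psum (F n) (sz (F n) - 1).
Let lamJ n c := lam (F n) (jn (F n) c).
Let tau n c := taun (F n) c.

Lemma psum_eventually_gt c : eventually (fun n => c < psumM n).
Proof.
apply (eventually_impl (fun n => 1 + c < chi2 (F n))); [apply cv_infty_eventually; auto|].
intros n H. rewrite spectral_chi2 in H by auto. unfold psumM. lra.
Qed.

Lemma jn_spec_n n c : 0 < c -> c < psumM n ->
  (1 <= jn (F n) c <= sz (F n) - 1)%nat /\ c < psum (F n) (jn (F n) c) /\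
  psum (F n) (jn (F n) c - 1) <= c /\ 0 < lamJ n c.
Proof.
intros H0 H1. destruct (jn_spec (F n) c H0 H1) as [A1 [A2 A3]].
repeat split; auto; try lia. apply (lam_pos (F n) (Hlam_mono_n n) (Hlam1_pos_n n)). lia.
Qed.

Lemma lamJ_pos n c : 0 < c -> c < psumM n -> 0 < lamJ n c.
Proof. intros. apply jn_spec_n; auto. Qed.

Lemma lamJ_le n c1 c2 : 0 < c1 -> c1 <= c2 -> c2 < psumM n -> lamJ n c1 <= lamJ n c2.
Proof.
intros H0 H1 H2. assert (Hj := jn_le (F n) c1 c2 H0 H1 H2).
destruct (jn_spec_n n c1) as [B1 _]; [lra|lra|]. destruct (jn_spec_n n c2) as [B2 _]; [lra|lra|].
apply (Hlam_mono_n n); lia.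
Qed.

Lemma tau_ge0 n c : 0 < c -> c < psumM n -> 0 <= tau n c.
Proof. intros. apply (taun_spec (F n) (Hlam_mono_n n) (Hlam1_pos_n n) c); auto. Qed.

Lemma tau_lam_infty_lamJ_le x c0 c : 0 < x -> 0 < c0 -> c0 <= c ->
  cv_infty (fun n => tau n x * lamJ n c0) -> cv_infty (fun n => tau n x * lamJ n c).
Proof.
intros Hx H0 H1 Hcv. apply (cv_infty_le _ _ Hcv).
apply (eventually_impl _ _ (psum_eventually_gt (Rmax x c))). intros n Hn.
assert (x <= Rmax x c) by apply Rmax_l. assert (c <= Rmax x c) by apply Rmax_r.
apply Rmult_le_compat_l; [apply tau_ge0; lra|apply lamJ_le; lra].
Qed.

Lemma tau_lam_infty_antimono x x' c : 0 < x' -> x' <= x -> 0 < c ->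
  cv_infty (fun n => tau n x * lamJ n c) -> cv_infty (fun n => tau n x' * lamJ n c).
Proof.
intros Hx' Hxx Hc Hcv. apply (cv_infty_le _ _ Hcv).
apply (eventually_impl _ _ (psum_eventually_gt (Rmax x c))). intros n Hn.
assert (x <= Rmax x c) by apply Rmax_l. assert (c <= Rmax x c) by apply Rmax_r.
apply Rmult_le_compat_r; [left; apply lamJ_pos; lra|].
apply (taun_antimono (F n)); unfold psumM in Hn; lra.
Qed.

Lemma cutoff_T2_lam_infty : has_L2_cutoff F -> forall eps c, 0 < eps -> 0 < c ->
  cv_infty (fun n => T2 (F n) eps * lamJ n c).
Proof.
intros [t [[N0 Ht] Hcut]] eps c He Hc Mt.
destruct (Hcut (1/2)) as [Hup Hlow]; [lra|].
set (Mt' := Rmax Mt 0 + 1).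
assert (HMt' : Mt < Mt' /\ 0 < Mt') by (unfold Mt'; split; [apply Rle_lt_trans with (Rmax Mt 0); [apply Rmax_l|lra]|assert (0 <= Rmax Mt 0) by apply Rmax_r; lra]).
set (eta := sqrt (c * exp (-6 * Mt'))).
assert (Hexp6 : 0 < c * exp (-6 * Mt')) by (assert (0 < exp (-6 * Mt')) by apply exp_pos; nra).
assert (Heta : 0 < eta) by (apply sqrt_lt_R0; auto).
destruct (Hup eta Heta) as [N1 H1].
destruct (cv_infty_eventually _ eps Hlow) as [N2 H2].
destruct (psum_eventually_gt c) as [N3 H3].
exists (N0 + N1 + N2 + N3)%nat. intros n Hn.
assert (Htn := Ht n ltac:(lia)). assert (A1 := H1 n ltac:(lia)). assert (A2 := H2 n ltac:(lia)).
destruct (jn_spec_n n c Hc (H3 n ltac:(lia))) as [Hj [Hcj [_ Hl]]].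
assert (Hbefore : (1 - 1/2) * t n <= T2 (F n) eps).
{ apply (T2_ge_of_lt (F n) (Hspec n)); auto.
  rewrite spectral_d2 in A2 by auto. apply sqrt_gt_iff in A2; auto. apply d2sq_ge0. }
assert (Hafter : d2sq (F n) ((1 + 1/2) * t n) < c * exp (-6 * Mt')).
{ unfold R_dist in A1. rewrite Rminus_0_r, spectral_d2, Rabs_pos_eq in A1 by (auto || apply sqrt_pos).
  apply sqrt_lt_iff in A1; [|apply d2sq_ge0|auto]. unfold eta in A1. rewrite pow2_sqrt in A1; lra. }
assert (LB := d2sq_ge_psum (F n) (Hlam_mono_n n) (Hlam1_pos_n n) ((1 + 1/2) * t n) (jn (F n) c) ltac:(lra) Hj).
fold (lamJ n c) in LB.
assert (Hexp : exp (-2 * lamJ n c * ((1 + 1 / 2) * t n)) < exp (-6 * Mt')).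
{ assert (0 < exp (-2 * lamJ n c * ((1 + 1 / 2) * t n))) by apply exp_pos.
  apply Rmult_lt_reg_l with c; [lra|]. nra. }
assert (Hlt : -2 * lamJ n c * ((1 + 1 / 2) * t n) < -6 * Mt').
{ apply Rnot_le_lt. intros Hge. apply exp_le_mono in Hge. lra. }
nra.
Qed.

Lemma d2sq_after_tau n c K : 0 < c -> c < psumM n -> 0 < K ->
  d2sq (F n) (2 * tau n c + K / lamJ n c) <= c + 5 * exp (- (2 * K)).
Proof.
intros Hc Hcn HK.
assert (Hl := lamJ_pos n c Hc Hcn). assert (Ht0 := tau_ge0 n c Hc Hcn).
assert (HKl : 0 < K / lamJ n c) by (apply Rdiv_lt_0_compat; auto).
set (u := tau n c + K / lamJ n c).
replace (2 * tau n c + K / lamJ n c) with (tau n c + u) by (unfold u; ring).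
assert (Hup := d2sq_le_tau_add (F n) (Hlam_mono_n n) (Hlam1_pos_n n) c u Hc Hcn ltac:(unfold u; lra)).
fold (tau n c) (lamJ n c) in Hup.
assert (Hfactor : 1 + 2 * (tau n c + u) / u <= 5).
{ apply Rmult_le_reg_r with u; [unfold u; lra|].
  replace ((1 + 2 * (tau n c + u) / u) * u) with (u + 2 * (tau n c + u)) by (field; unfold u; lra).
  unfold u. lra. }
assert (Hdecay : exp (-2 * lamJ n c * u) <= exp (- (2 * K))).
{ apply exp_le_mono. unfold u.
  replace (-2 * lamJ n c * (tau n c + K / lamJ n c)) with (-2 * (lamJ n c * tau n c) - 2 * K)
    by (field; lra).
  assert (0 <= lamJ n c * tau n c) by nra. lra. }
assert (0 < exp (-2 * lamJ n c * u)) by apply exp_pos.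
assert (0 <= 2 * (tau n c + u) / u)
  by (apply Rmult_le_pos; [unfold u; lra|left; apply Rinv_0_lt_compat; unfold u; lra]).
assert ((1 + 2 * (tau n c + u) / u) * exp (-2 * lamJ n c * u) <= 5 * exp (- (2 * K)))
  by (apply Rmult_le_compat; lra).
lra.
Qed.

(* If [tau c1] were much smaller than [tau c0], the profile at time [2 tau c1 + O(1/lam)]
   would be both at most [2 c1] (upper bound at [tau c1]) and huge (lower bound before
   [tau c0]). *)
Lemma tau_gap c0 c1 : 0 < c0 -> c0 < c1 -> exists K, 0 < K /\
  eventually (fun n => tau n c0 - K / lamJ n c0 < 2 * tau n c1).
Proof.
intros H0 H1.
destruct (exp_neg_small 5 c1) as [K1 [HK1 HK1small]]; [lra|].
destruct (exp_large (2 * c1 * (1 + c0) / c0)) as [K0 [HK0 HK0large]].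
exists (K0 + K1). split; [lra|].
apply (eventually_impl _ _ (psum_eventually_gt c1)). intros n Hn.
assert (Hn0 : c0 < psumM n) by lra.
assert (Hl0 := lamJ_pos n c0 H0 Hn0). assert (Hl1 := lamJ_pos n c1 ltac:(lra) Hn).
assert (Hmono : lamJ n c0 <= lamJ n c1) by (apply lamJ_le; lra).
assert (Ht1 := tau_ge0 n c1 ltac:(lra) Hn).
set (t := 2 * tau n c1 + K1 / lamJ n c1).
assert (HK1l : 0 < K1 / lamJ n c1) by (apply Rdiv_lt_0_compat; auto).
assert (Hsmall : d2sq (F n) t <= 2 * c1).
{ assert (5 * exp (- (2 * K1)) <= c1) by (apply HK1small; lra).
  assert (d2sq (F n) t <= c1 + 5 * exp (- (2 * K1))) by (apply d2sq_after_tau; lra). lra. }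
assert (Hlt : tau n c0 - K0 / lamJ n c0 < t).
{ apply Rnot_le_lt. intros Hle.
  assert (HK0l : 0 < K0 / lamJ n c0) by (apply Rdiv_lt_0_compat; auto).
  assert (L := d2sq_lower (F n) (Hlam_mono_n n) (Hlam1_pos_n n) c0 t H0 Hn0
    ltac:(unfold t; lra) ltac:(fold (tau n c0); lra)).
  fold (lamJ n c0) (tau n c0) in L.
  assert (E : exp (2 * K0) <= exp (2 * lamJ n c0 * (tau n c0 - t))).
  { apply exp_le_mono. assert (lamJ n c0 * (K0 / lamJ n c0) = K0) by (field; lra).
    assert (K0 / lamJ n c0 <= tau n c0 - t) by lra. nra. }
  assert (Hq : 0 < c0 / (1 + c0)) by (apply Rdiv_lt_0_compat; lra).
  apply Rmult_lt_compat_l with (r := c0 / (1 + c0)) in HK0large; auto.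
  replace (c0 / (1 + c0) * (2 * c1 * (1 + c0) / c0)) with (2 * c1) in HK0large by (field; lra).
  assert (c0 / (1 + c0) * exp (2 * K0) <= c0 / (1 + c0) * exp (2 * lamJ n c0 * (tau n c0 - t)))
    by (apply Rmult_le_compat_l; lra).
  lra. }
assert (K1 / lamJ n c1 <= K1 / lamJ n c0).
{ unfold Rdiv. apply Rmult_le_compat_l; [lra|]. apply Rinv_le_contravar; auto. }
unfold t in Hlt. unfold Rdiv in *. rewrite Rmult_plus_distr_r. lra.
Qed.

Lemma tau_lam_infty_larger c c0 c1 : 0 < c -> c <= c0 -> c0 < c1 ->
  cv_infty (fun n => tau n c0 * lamJ n c) -> cv_infty (fun n => tau n c1 * lamJ n c).
Proof.
intros Hc H0 H1 Hcv Mt.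
destruct (tau_gap c0 c1) as [K [HK Hgap]]; [lra|auto|].
destruct (eventually_and _ _ (eventually_and _ _ Hgap (psum_eventually_gt c0))
  (cv_infty_eventually _ (2 * Mt + K) Hcv)) as [N0 HN].
exists N0. intros n Hn. destruct (HN n Hn) as [[A1 A2] A3].
assert (Hl := lamJ_pos n c Hc ltac:(lra)).
assert (Hm : lamJ n c <= lamJ n c0) by (apply lamJ_le; lra).
apply Rmult_lt_compat_r with (r := lamJ n c) in A1; auto.
assert (K / lamJ n c0 * lamJ n c <= K) by (apply div_mul_le; lra).
lra.
Qed.

Lemma T2_lam_infty_tau_lam_infty :
  (exists eps, 0 < eps /\ forall c, 0 < c -> cv_infty (fun n => T2 (F n) eps * lamJ n c)) ->
  exists ct, 0 < ct /\ forall c, 0 < c -> cv_infty (fun n => tau n ct * lamJ n c).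
Proof.
intros [eps [He HT2]]. set (ct := eps ^ 2 / 2).
assert (Hct : 0 < ct) by (unfold ct; nra).
exists ct. split; auto.
destruct (exp_neg_small 5 ct Hct) as [K [HK HKsmall]].
assert (HT2le : eventually (fun n => T2 (F n) eps <= 2 * tau n ct + K / lamJ n ct)).
{ apply (eventually_impl _ _ (psum_eventually_gt ct)). intros n Hn.
  assert (Hl := lamJ_pos n ct Hct Hn). assert (Ht := tau_ge0 n ct Hct Hn).
  assert (0 < K / lamJ n ct) by (apply Rdiv_lt_0_compat; auto).
  apply (T2_le_of_le (F n) (Hspec n)); auto; [lra|].
  assert (d2sq (F n) (2 * tau n ct + K / lamJ n ct) <= ct + 5 * exp (- (2 * K)))
    by (apply d2sq_after_tau; auto).
  assert (5 * exp (- (2 * K)) <= ct) by (apply HKsmall; lra).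
  unfold ct in *. lra. }
assert (Hsmall_c : forall c, 0 < c -> c <= ct -> cv_infty (fun n => tau n ct * lamJ n c)).
{ intros c Hc Hcc Mt.
  destruct (eventually_and _ _ (eventually_and _ _ HT2le (psum_eventually_gt ct))
    (cv_infty_eventually _ (2 * Mt + K) (HT2 c Hc))) as [N0 HN].
  exists N0. intros n Hn. destruct (HN n Hn) as [[A1 A2] A3].
  assert (Hl := lamJ_pos n c Hc ltac:(lra)).
  assert (Hm : lamJ n c <= lamJ n ct) by (apply lamJ_le; lra).
  apply Rmult_le_compat_r with (r := lamJ n c) in A1; [|lra].
  assert (K / lamJ n ct * lamJ n c <= K) by (apply div_mul_le; lra).
  lra. }
intros c Hc. destruct (Rle_dec c ct) as [Hle|Hgt]; [auto|].
apply (tau_lam_infty_lamJ_le ct ct c); try lra. apply Hsmall_c; lra.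
Qed.

Lemma tau_lam_infty_of_some :
  (exists ct0, 0 < ct0 /\ forall c, 0 < c -> cv_infty (fun n => tau n ct0 * lamJ n c)) ->
  forall ct c, 0 < ct -> 0 < c -> cv_infty (fun n => tau n ct * lamJ n c).
Proof.
intros [ct0 [H0 H6]] ct c Hct Hc.
destruct (Rle_dec ct ct0) as [Hle|Hgt].
- apply (tau_lam_infty_antimono ct0); auto.
- destruct (Rle_dec c ct0) as [Hle'|Hgt'].
  + apply (tau_lam_infty_larger c ct0 ct); auto; lra.
  + apply (tau_lam_infty_lamJ_le ct ct0 c); auto; try lra.
    apply (tau_lam_infty_larger ct0 ct0 ct); auto; lra.
Qed.

Lemma tau_lam_infty_of_diag : (forall c, 0 < c -> cv_infty (fun n => tau n c * lamJ n c)) ->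
  forall ct c, 0 < ct -> 0 < c -> cv_infty (fun n => tau n ct * lamJ n c).
Proof.
intros H4 ct c Hct Hc.
destruct (Rle_dec ct c) as [Hle|Hgt].
- apply (tau_lam_infty_antimono c); auto.
- apply (tau_lam_infty_larger c c ct); auto; lra.
Qed.

Lemma tau_eventually_pos c : 0 < c -> cv_infty (fun n => tau n c * lamJ n c) ->
  eventually (fun n => 0 < tau n c).
Proof.
intros Hc Hcv.
apply (eventually_impl _ _ (eventually_and _ _ (cv_infty_eventually _ 0 Hcv) (psum_eventually_gt c))).
intros n [A1 A2]. assert (Hl := lamJ_pos n c Hc A2).
apply Rnot_le_lt. intros Hle. nra.
Qed.

Lemma d2_after_tau c a : 0 < c -> 0 < a ->
  (forall c', 0 < c' -> cv_infty (fun n => tau n c * lamJ n c')) ->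
  Un_cv (fun n => Defs.d2 (F n) ((1 + a) * tau n c)) 0.
Proof.
intros Hc Ha Hcv eta Heta. set (c' := Rmin c (eta ^ 2 / 4)).
assert (Hc' : 0 < c') by (unfold c'; apply Rmin_glb_lt; nra).
assert (Hc'c : c' <= c) by apply Rmin_l. assert (Hc'eta : c' <= eta ^ 2 / 4) by apply Rmin_r.
destruct (exp_neg_small c (eta ^ 2 / 4)) as [X1 [HX1 Hhead]]; [nra|].
destruct (exp_neg_small (1 + 2 * (1 + a) / a) (eta ^ 2 / 4)) as [X2 [HX2 Htail]]; [nra|].
destruct (eventually_and _ _ (eventually_and _ _ (cv_infty_eventually _ X1 (Hcv c' Hc'))
  (cv_infty_eventually _ (X2 / (2 * a)) (Hcv c Hc))) (psum_eventually_gt c)) as [N0 HN].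
exists N0. intros n Hn. destruct (HN n Hn) as [[A1 A2] A3].
assert (Hl := lamJ_pos n c Hc A3). assert (Hl' := lamJ_pos n c' Hc' ltac:(lra)).
assert (HX2a : 0 < X2 / (2 * a)) by (apply Rdiv_lt_0_compat; lra).
assert (Htau : 0 < tau n c) by nra.
unfold R_dist. rewrite Rminus_0_r, spectral_d2, Rabs_pos_eq by (auto || apply sqrt_pos).
apply sqrt_lt_iff; [apply d2sq_ge0|auto|].
assert (Hup := d2sq_le_tau_add_sharp (F n) (Hlam_mono_n n) (Hlam1_pos_n n) c' c (a * tau n c)
  Hc' Hc'c A3 ltac:(nra)).
fold (tau n c) (lamJ n c) (lamJ n c') in Hup.
replace (tau n c + a * tau n c) with ((1 + a) * tau n c) in Hup by ring.
replace (2 * ((1 + a) * tau n c) / (a * tau n c)) with (2 * (1 + a) / a) in Hup by (field; lra).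
assert (c * exp (-2 * lamJ n c' * ((1 + a) * tau n c)) <= eta ^ 2 / 4).
{ replace (-2 * lamJ n c' * ((1 + a) * tau n c)) with (- (2 * (1 + a) * (tau n c * lamJ n c')))
    by ring.
  apply Hhead. nra. }
assert ((1 + 2 * (1 + a) / a) * exp (-2 * lamJ n c * (a * tau n c)) <= eta ^ 2 / 4).
{ replace (-2 * lamJ n c * (a * tau n c)) with (- (2 * a * (tau n c * lamJ n c))) by ring.
  apply Htail. apply Rmult_lt_compat_l with (r := 2 * a) in A2; [|lra].
  replace (2 * a * (X2 / (2 * a))) with X2 in A2 by (field; lra). lra. }
nra.
Qed.

Lemma d2_before_tau c a : 0 < c -> 0 < a < 1 ->
  cv_infty (fun n => tau n c * lamJ n c) ->
  cv_infty (fun n => Defs.d2 (F n) ((1 - a) * tau n c)).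
Proof.
intros Hc [Ha Ha1] Hcv Mt. set (Mt' := Rmax Mt 1).
assert (HM1 : 1 <= Mt') by apply Rmax_r. assert (HM2 : Mt <= Mt') by apply Rmax_l.
set (Q := Mt' ^ 2 * (1 + c) / (c * (2 * a))).
destruct (eventually_and _ _ (cv_infty_eventually _ Q Hcv) (psum_eventually_gt c)) as [N0 HN].
exists N0. intros n Hn. destruct (HN n Hn) as [A1 A2].
assert (Hl := lamJ_pos n c Hc A2). assert (Ht0 := tau_ge0 n c Hc A2).
assert (L := d2sq_lower (F n) (Hlam_mono_n n) (Hlam1_pos_n n) c ((1 - a) * tau n c) Hc A2
  ltac:(nra) ltac:(fold (tau n c); nra)).
fold (lamJ n c) (tau n c) in L.
replace (tau n c - (1 - a) * tau n c) with (a * tau n c) in L by ring.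
assert (E1 := exp_ineq1_le (2 * lamJ n c * (a * tau n c))).
assert (Hq : 0 < c / (1 + c)) by (apply Rdiv_lt_0_compat; lra).
assert (Mt' ^ 2 < d2sq (F n) ((1 - a) * tau n c)).
{ apply Rlt_le_trans with (c / (1 + c) * (1 + 2 * lamJ n c * (a * tau n c))); [|nra].
  assert (EQ : c / (1 + c) * (2 * a) * Q = Mt' ^ 2) by (unfold Q; field; lra).
  assert (c / (1 + c) * (2 * a) * Q < c / (1 + c) * (2 * a) * (tau n c * lamJ n c))
    by (apply Rmult_lt_compat_l; [nra|auto]).
  nra. }
rewrite spectral_d2 by auto. apply Rle_lt_trans with Mt'; auto.
apply sqrt_gt_iff; [apply d2sq_ge0|lra|auto].
Qed.

Lemma cutoff_time_taun c : 0 < c ->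
  (forall c', 0 < c' -> cv_infty (fun n => tau n c * lamJ n c')) ->
  cutoff_time F (fun n => tau n c).
Proof.
intros Hc Hcv. split.
- destruct (tau_eventually_pos c Hc (Hcv c Hc)) as [N0 HN]. exists N0. exact HN.
- intros a Ha. split.
  + apply d2_after_tau; auto; lra.
  + apply d2_before_tau; auto.
Qed.

Lemma T2_le_T2_add eps delta c : 0 < eps -> 0 < delta -> 0 < c ->
  (forall c', 0 < c' -> cv_infty (fun n => T2 (F n) delta * lamJ n c')) ->
  exists K, 0 < K /\ eventually (fun n => T2 (F n) eps <= T2 (F n) delta + K / lamJ n c).
Proof.
intros He Hd Hc Hcv. set (c' := Rmin c (eps ^ 2 / 4)).
assert (Hc' : 0 < c') by (unfold c'; apply Rmin_glb_lt; nra).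
assert (Hc'c : c' <= c) by apply Rmin_l. assert (Hc'eps : c' <= eps ^ 2 / 4) by apply Rmin_r.
destruct (exp_neg_small c (eps ^ 2 / 4)) as [X1 [HX1 Hhead]]; [nra|].
destruct (exp_neg_small (delta ^ 2) (eps ^ 2 / 4)) as [K [HK Htail]]; [nra|].
exists K. split; auto.
apply (eventually_impl _ _ (eventually_and _ _ (cv_infty_eventually _ X1 (Hcv c' Hc'))
  (psum_eventually_gt c))).
intros n [A1 A2].
assert (Hl := lamJ_pos n c Hc A2). assert (Hl' := lamJ_pos n c' Hc' ltac:(lra)).
destruct (T2_spec (F n) (Hspec n) delta Hd) as [HT0 [HT1 _]].
set (T := T2 (F n) delta) in *.
assert (HKl : 0 < K / lamJ n c) by (apply Rdiv_lt_0_compat; auto).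
apply (T2_le_of_le (F n) (Hspec n)); auto; [lra|].
assert (Hup := d2sq_le_shift (F n) (Hlam_mono_n n) (Hlam1_pos_n n) c' c T (K / lamJ n c)
  Hc' Hc'c A2 HT0 ltac:(lra)).
fold (lamJ n c) (lamJ n c') in Hup.
replace (-2 * lamJ n c * (K / lamJ n c)) with (- (2 * K)) in Hup by (field; lra).
assert (c * exp (-2 * lamJ n c' * (T + K / lamJ n c)) <= eps ^ 2 / 4).
{ replace (-2 * lamJ n c' * (T + K / lamJ n c))
    with (- (2 * (T * lamJ n c') + 2 * lamJ n c' * (K / lamJ n c))) by ring.
  apply Hhead. assert (0 <= lamJ n c' * (K / lamJ n c)) by nra. lra. }
assert (delta ^ 2 * exp (- (2 * K)) <= eps ^ 2 / 4) by (apply Htail; lra).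
assert (0 < exp (- (2 * K))) by apply exp_pos.
assert (exp (- (2 * K)) * d2sq (F n) T <= exp (- (2 * K)) * delta ^ 2)
  by (apply Rmult_le_compat_l; lra).
nra.
Qed.

Lemma T2_diff_bigO : (forall e c, 0 < e -> 0 < c -> cv_infty (fun n => T2 (F n) e * lamJ n c)) ->
  forall eps delta c, 0 < eps -> 0 < delta -> 0 < c ->
  bigO (fun n => Rabs (T2 (F n) eps - T2 (F n) delta)) (fun n => / lamJ n c).
Proof.
intros H2 eps delta c He Hd Hc.
destruct (T2_le_T2_add eps delta c He Hd Hc (fun c' => H2 delta c' Hd)) as [K1 [HK1 E1]].
destruct (T2_le_T2_add delta eps c Hd He Hc (fun c' => H2 eps c' He)) as [K2 [HK2 E2]].
destruct (eventually_and _ _ (eventually_and _ _ E1 E2) (psum_eventually_gt c)) as [N0 HN].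
exists (Rmax K1 K2), N0. intros n Hn. destruct (HN n Hn) as [[A1 A2] A3].
assert (Hl := lamJ_pos n c Hc A3).
assert (K1 <= Rmax K1 K2) by apply Rmax_l. assert (K2 <= Rmax K1 K2) by apply Rmax_r.
assert (0 < / lamJ n c) by (apply Rinv_0_lt_compat; auto).
unfold Rdiv in *. apply Rabs_le. split; nra.
Qed.

Lemma T2_ge_tau_sub eps c : 0 < eps -> 0 < c ->
  exists K, 0 < K /\ eventually (fun n => tau n c - K / lamJ n c <= T2 (F n) eps).
Proof.
intros He Hc.
destruct (exp_large (eps ^ 2 * (1 + c) / c)) as [K [HK Hlarge]].
exists K. split; auto.
apply (eventually_impl _ _ (psum_eventually_gt c)). intros n Hn.
assert (Hl := lamJ_pos n c Hc Hn).
destruct (T2_spec (F n) (Hspec n) eps He) as [HT0 _].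
destruct (Rle_dec (tau n c - K / lamJ n c) 0) as [|Hpos]; [lra|]. apply Rnot_le_lt in Hpos.
apply (T2_ge_of_lt (F n) (Hspec n)); auto.
assert (HKl : 0 < K / lamJ n c) by (apply Rdiv_lt_0_compat; lra).
assert (L := d2sq_lower (F n) (Hlam_mono_n n) (Hlam1_pos_n n) c (tau n c - K / lamJ n c) Hc Hn
  ltac:(lra) ltac:(fold (tau n c); lra)).
fold (lamJ n c) (tau n c) in L.
replace (2 * lamJ n c * (tau n c - (tau n c - K / lamJ n c))) with (2 * K) in L by (field; lra).
assert (Hq : 0 < c / (1 + c)) by (apply Rdiv_lt_0_compat; lra).
apply Rmult_lt_compat_l with (r := c / (1 + c)) in Hlarge; auto.
replace (c / (1 + c) * (eps ^ 2 * (1 + c) / c)) with (eps ^ 2) in Hlarge by (field; lra).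
lra.
Qed.

Lemma T2_le_tau_add eps c : 0 < eps -> 0 < c ->
  (forall c', 0 < c' -> cv_infty (fun n => tau n c * lamJ n c')) ->
  eventually (fun n => T2 (F n) eps <= tau n c + sqrt (tau n c / lamJ n c)
                       /\ 1 <= tau n c * lamJ n c).
Proof.
intros He Hc Hcv. set (c' := Rmin c (eps ^ 2 / 4)).
assert (Hc' : 0 < c') by (unfold c'; apply Rmin_glb_lt; nra).
assert (Hc'c : c' <= c) by apply Rmin_l. assert (Hc'eps : c' <= eps ^ 2 / 4) by apply Rmin_r.
destruct (exp_neg_small c (eps ^ 2 / 4)) as [X1 [HX1 Hhead]]; [nra|].
set (W := Rmax 1 ((6 / eps ^ 2) ^ 2)).
assert (HW1 : 1 <= W) by apply Rmax_l. assert (HW2 : (6 / eps ^ 2) ^ 2 <= W) by apply Rmax_r.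
apply (eventually_impl _ _ (eventually_and _ _ (eventually_and _ _
  (cv_infty_eventually _ W (Hcv c Hc)) (cv_infty_eventually _ X1 (Hcv c' Hc')))
  (psum_eventually_gt c))).
intros n [[A1 A2] A3]. split; [|lra].
assert (Hl := lamJ_pos n c Hc A3). assert (Hl' := lamJ_pos n c' Hc' ltac:(lra)).
assert (Hta : 0 < tau n c) by nra.
assert (Hs : 0 <= sqrt (tau n c / lamJ n c)) by apply sqrt_pos.
apply (T2_le_of_le (F n) (Hspec n)); auto; [lra|].
assert (Hup := d2sq_le_tau_add_sqrt (F n) (Hlam_mono_n n) (Hlam1_pos_n n) c' c Hc' Hc'c A3 Hta).
fold (tau n c) (lamJ n c) (lamJ n c') in Hup.
assert (c * exp (-2 * lamJ n c' * (tau n c + sqrt (tau n c / lamJ n c))) <= eps ^ 2 / 4).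
{ apply Rle_trans with (c * exp (- (tau n c * lamJ n c'))); [|apply Hhead; lra].
  assert (0 <= lamJ n c' * sqrt (tau n c / lamJ n c)) by nra.
  apply Rmult_le_compat_l; [lra|]. apply exp_le_mono. nra. }
assert (Hx6 : 6 / eps ^ 2 <= sqrt (tau n c * lamJ n c)).
{ rewrite <- (sqrt_pow2 (6 / eps ^ 2)) by (apply Rlt_le, Rdiv_lt_0_compat; nra).
  apply sqrt_le_1_alt. lra. }
assert (3 / (1 + sqrt (tau n c * lamJ n c)) <= eps ^ 2 / 2).
{ set (x := sqrt (tau n c * lamJ n c)) in *.
  assert (0 < 6 / eps ^ 2) by (apply Rdiv_lt_0_compat; nra).
  apply Rmult_le_reg_r with (2 * (1 + x)); [lra|].
  replace (3 / (1 + x) * (2 * (1 + x))) with 6 by (field; lra).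
  replace (eps ^ 2 / 2 * (2 * (1 + x))) with (eps ^ 2 * (1 + x)) by field.
  apply Rmult_le_compat_l with (r := eps ^ 2) in Hx6; [|nra].
  replace (eps ^ 2 * (6 / eps ^ 2)) with 6 in Hx6 by (field; nra). nra. }
lra.
Qed.

Lemma T2_tau_diff_bigO : (forall ct c, 0 < ct -> 0 < c -> cv_infty (fun n => tau n ct * lamJ n c)) ->
  forall eps c, 0 < eps -> 0 < c ->
  bigO (fun n => Rabs (T2 (F n) eps - tau n c)) (fun n => sqrt (tau n c / lamJ n c)).
Proof.
intros H5 eps c He Hc.
destruct (T2_ge_tau_sub eps c He Hc) as [K [HK Hlow]].
assert (Hup := T2_le_tau_add eps c He Hc (fun c' Hc' => H5 c c' Hc Hc')).
destruct (eventually_and _ _ (eventually_and _ _ Hlow Hup) (psum_eventually_gt c)) as [N0 HN].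
exists (Rmax K 1), N0. intros n Hn. destruct (HN n Hn) as [[A1 [A2 A3]] A4].
assert (Hl := lamJ_pos n c Hc A4).
assert (HK1 : K <= Rmax K 1) by apply Rmax_l. assert (HK2 : 1 <= Rmax K 1) by apply Rmax_r.
set (s := sqrt (tau n c / lamJ n c)) in *.
assert (Hinv : / lamJ n c <= s).
{ unfold s. rewrite <- (sqrt_pow2 (/ lamJ n c)) by (left; apply Rinv_0_lt_compat; auto).
  apply sqrt_le_1_alt. replace ((/ lamJ n c) ^ 2) with (1 / lamJ n c * / lamJ n c) by (field; lra).
  unfold Rdiv. apply Rmult_le_compat_r; [left; apply Rinv_0_lt_compat; auto|].
  apply Rmult_le_reg_r with (lamJ n c); auto. rewrite Rmult_assoc, Rinv_l by lra. lra. }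
assert (0 <= s) by apply sqrt_pos.
assert (K / lamJ n c <= Rmax K 1 * s) by (unfold Rdiv; nra).
apply Rabs_le. split; nra.
Qed.

End Family.

Theorem theorem3p2 (F : nat -> chain)
  (Hchain : forall n, rev_chain (F n))
  (Hspec : forall n, spectral_data (F n))
  (Hchi : cv_infty (fun n => chi2 (F n))) :
  let P1 := has_L2_cutoff F in
  let P2 := forall eps c, 0 < eps -> 0 < c ->
      cv_infty (fun n => T2 (F n) eps * lam (F n) (jn (F n) c)) in
  let P3 := exists eps, 0 < eps /\ forall c, 0 < c ->
      cv_infty (fun n => T2 (F n) eps * lam (F n) (jn (F n) c)) in
  let P4 := forall c, 0 < c ->
      cv_infty (fun n => taun (F n) c * lam (F n) (jn (F n) c)) in
  let P5 := forall ct c, 0 < ct -> 0 < c ->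
      cv_infty (fun n => taun (F n) ct * lam (F n) (jn (F n) c)) in
  let P6 := exists ct, 0 < ct /\ forall c, 0 < c ->
      cv_infty (fun n => taun (F n) ct * lam (F n) (jn (F n) c)) in
  ((P1 <-> P2) /\ (P1 <-> P3) /\ (P1 <-> P4) /\ (P1 <-> P5) /\ (P1 <-> P6)) /\
  (P1 ->
     (forall c, 0 < c -> cutoff_time F (fun n => taun (F n) c)) /\
     (forall eps delta c, 0 < eps -> 0 < delta -> 0 < c ->
        bigO (fun n => Rabs (T2 (F n) eps - T2 (F n) delta))
             (fun n => / lam (F n) (jn (F n) c))) /\
     (forall eps c, 0 < eps -> 0 < c ->
        bigO (fun n => Rabs (T2 (F n) eps - taun (F n) c))
             (fun n => sqrt (taun (F n) c / lam (F n) (jn (F n) c))))).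
Proof.
intros P1 P2 P3 P4 P5 P6.
assert (Hsc : forall n, spectral_chain (F n)) by (intros n; split; auto).
assert (h12 : P1 -> P2) by exact (cutoff_T2_lam_infty F Hsc Hchi).
assert (h23 : P2 -> P3) by (intros H; exists 1; split; [lra|]; intros c Hc; apply H; lra).
assert (h36 : P3 -> P6) by exact (T2_lam_infty_tau_lam_infty F Hsc Hchi).
assert (h65 : P6 -> P5) by exact (tau_lam_infty_of_some F Hsc Hchi).
assert (h54 : P5 -> P4) by (intros H c Hc; apply H; auto).
assert (h45 : P4 -> P5) by exact (tau_lam_infty_of_diag F Hsc Hchi).
assert (Hcutoff : P5 -> forall c, 0 < c -> cutoff_time F (fun n => taun (F n) c))
  by (intros H c Hc; apply (cutoff_time_taun F Hsc Hchi c Hc); intros c' Hc'; apply H; auto).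
assert (h51 : P5 -> P1) by (intros H; exists (fun n => taun (F n) 1); apply Hcutoff; auto; lra).
split; [repeat split; tauto|].
intros H1. assert (H5 : P5) by tauto.
split; [|split].
- exact (Hcutoff H5).
- exact (T2_diff_bigO F Hsc Hchi (h12 H1)).
- exact (T2_tau_diff_bigO F Hsc Hchi H5).
Qed.
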